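(* Let $n\ge5$ and $\lambda\in\mathbb{R}$. The intrinsic $\mathrm{RMG}_\lambda$ flow on $({\sf Rat}_n^{eq},\gamma^{eq}_{L^2})$ is incomplete: there exist initial data $x\in{\sf Rat}_n^{eq}$, $v\in T_x{\sf Rat}_n^{eq}$ whose $\mathrm{RMG}_\lambda$ curve cannot be extended to all times $t\in\mathbb{R}$ within ${\sf Rat}_n^{eq}$.
   Context: ${\sf Rat}_n$ is the space of degree $n$ rational maps $W:S^2\to S^2$, a complex manifold via $W=\frac{a_0+\dots+a_nz^n}{b_0+\dots+b_nz^n}\mapsto[a_0,\dots,a_n,b_0,\dots,b_n]\in\mathbb{C}P^{2n+1}$, with the $L^2$ metric $\gamma_{L^2}(\dot W,\dot W)=16\int_{\mathbb{C}}\frac{|\dot W(z)|^2}{(1+|W(z)|^2)^2}\frac{dx\,dy}{(1+|z|^2)^2}$ ($z=x+iy$), which is Kähler. ${\sf Rat}_n^{eq}=\{W(z)=cz^n:c\in\mathbb{C}^\times\}\cong\mathbb{C}^\times$ is a complex curve in ${\sf Rat}_n$ (the fixed point set of the circle of holomorphic isometries $W(z)\mapsto e^{in\alpha}W(e^{-i\alpha}z)$), and $\gamma^{eq}_{L^2}$ is the induced metric. The intrinsic RMG flow is the RMG flow of $({\sf Rat}_n^{eq},\gamma^{eq}_{L^2})$ regarded as a Kähler manifold in its own right: for a Kähler manifold with Ricci form $\rho(X,Y)=\mathrm{Ric}(JX,Y)$, a curve $\alpha$ is $\mathrm{RMG}_\lambda$ if $\nabla^\alpha_{d/dt}\dot\alpha=\lambda\,\sharp\,\iota_{\dot\alpha}\rho$.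 *)

From Stdlib Require Import Reals Lra ClassicalEpsilon.
Open Scope R_scope.

(* Derivative of a real function at a point, as a total function
   (chosen by Hilbert epsilon; it is the derivative whenever f is
   differentiable at x, since the derivative is then unique). *)
Definition Der (f : R -> R) (x : R) : R :=
  epsilon (inhabits 0) (fun l => derivable_pt_lim f x l).

Definition d_u (f : R -> R -> R) : R -> R -> R :=
  fun u v => Der (fun s => f s v) u.
Definition d_v (f : R -> R -> R) : R -> R -> R :=
  fun u v => Der (fun s => f u s) v.

Definition is_imp_int0 (f : R -> R) (l : R) : Prop :=
  (forall b, 0 <= b -> inhabited (Riemann_integrable f 0 b)) /\
  (forall eps, 0 < eps -> exists B, forall b (pr : Riemann_integrable f 0 b),
      B <= b -> Rabs (RiemannInt pr - l) < eps).

Definition ImpInt0 (f : R -> R) : R :=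
  epsilon (inhabits 0) (is_imp_int0 f).

(* Coordinates on Rat_n^eq = { c z^n : c in C^x } : c = u + i v, (u,v) <> 0.
   For W = c z^n and Wdot = cdot z^n,
     gamma_L2(Wdot,Wdot) = 16 int_C |cdot|^2 |z|^(2n) /
                            ((1+|c|^2|z|^(2n))^2 (1+|z|^2)^2) dx dy
                         = conf n u v * |cdot|^2,
   where (polar coordinates z = rho e^{i theta})
     conf n u v = 32 pi int_0^oo rho^(2n+1) /
                   ((1+(u^2+v^2) rho^(2n))^2 (1+rho^2)^2) d rho.          *)
Definition conf (n : nat) (u v : R) : R :=
  32 * PI * ImpInt0 (fun p => p ^ (2 * n + 1) /
                               ((1 + (u ^ 2 + v ^ 2) * p ^ (2 * n)) ^ 2 * (1 + p ^ 2) ^ 2)).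

(* Gaussian curvature of the conformal metric G (du^2 + dv^2):
   K = - Laplacian(ln G) / (2 G).  On a Kaehler curve Ric = K g,
   so the Ricci form is rho = K omega. *)
Definition lnconf (n : nat) : R -> R -> R := fun u v => ln (conf n u v).

Definition gauss_K (n : nat) (u v : R) : R :=
  - (d_u (d_u (lnconf n)) u v + d_v (d_v (lnconf n)) u v) / (2 * conf n u v).

(* Covariant acceleration nabla_{d/dt} alpha-dot of the Levi-Civita
   connection of G (du^2+dv^2), at position (u,v), velocity (u1,v1),
   coordinate acceleration (u2,v2). Christoffel symbols:
   G^u_uu = G_u/2G, G^u_uv = G_v/2G, G^u_vv = -G_u/2G,
   G^v_vv = G_v/2G, G^v_uv = G_u/2G, G^v_uu = -G_v/2G. *)
Definition cov_acc_u (n : nat) (u v u1 v1 u2 v2 : R) : R :=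
  u2 + (d_u (conf n) u v * u1 ^ 2 + 2 * d_v (conf n) u v * u1 * v1
        - d_u (conf n) u v * v1 ^ 2) / (2 * conf n u v).
Definition cov_acc_v (n : nat) (u v u1 v1 u2 v2 : R) : R :=
  v2 + (d_v (conf n) u v * v1 ^ 2 + 2 * d_u (conf n) u v * u1 * v1
        - d_v (conf n) u v * u1 ^ 2) / (2 * conf n u v).

(* RMG_lambda equation: nabla_{d/dt} alpha-dot = lambda # iota_{alpha-dot} rho.
   With rho(X,Y) = Ric(JX,Y) = K g(JX,Y) we get # iota_{alpha-dot} rho
   = K J alpha-dot, and J(u1,v1) = (-v1,u1) (multiplication by i on c). *)
Definition RMG_eq (n : nat) (lam : R) (u v u1 v1 u2 v2 : R) : Prop :=
  cov_acc_u n u v u1 v1 u2 v2 = lam * gauss_K n u v * (- v1) /\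
  cov_acc_v n u v u1 v1 u2 v2 = lam * gauss_K n u v * u1.

Definition global_RMG_curve (n : nat) (lam x0 y0 vx vy : R) : Prop :=
  exists u v u1 v1 u2 v2 : R -> R,
    u 0 = x0 /\ v 0 = y0 /\ u1 0 = vx /\ v1 0 = vy /\
    (forall t, u t <> 0 \/ v t <> 0) /\
    (forall t, derivable_pt_lim u t (u1 t) /\ derivable_pt_lim v t (v1 t) /\
               derivable_pt_lim u1 t (u2 t) /\ derivable_pt_lim v1 t (v2 t)) /\
    (forall t, RMG_eq n lam (u t) (v t) (u1 t) (v1 t) (u2 t) (v2 t)).

(* In the coordinate [c = u + i v] of [c z^n], the L^2 metric is [F(|c|^2) |dc|^2], and the
   rotations [c -> e^{ia} c] are isometries.  An RMG curve therefore conserves its energy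
   [F |c'|^2] and a momentum [F Im(conj c c') + lam s (ln F)'(s)].  Rescaling [p -> mu p] in the
   integral defining [F] gives [F(s) ~ s^{-(n+1)/n}] as [s -> oo], with explicit constants once
   [n >= 5].  Start at [c = 1] with momentum [-lam (1 + 1/n)], which cancels the leading part of
   the magnetic term, and with large energy: then the radial speed satisfies
   [Re(conj c c') |c|^{-2-1/n} >= 1] while [|c| >= 1], so [mu = |c|^{-1/n}] decreases at rate at
   least [1/n] and would become negative before time [n]; the curve leaves [C^x] through [oo]. *)

From Stdlib Require Import Reals Lra Lia ClassicalEpsilon Classical_Prop FunctionalExtensionality.
From Coquelicot Require Import Coquelicot.
Open Scope R_scope.

(** * Improper integrals on [0, +oo) *)

Lemma ex_derive_continuous_R (f : R -> R) x : ex_derive f x -> continuous f x.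
Proof. exact (ex_derive_continuous f x). Qed.

Lemma ex_RInt_continuous_R (f : R -> R) a b :
  (forall z, Rmin a b <= z <= Rmax a b -> continuous f z) -> ex_RInt f a b.
Proof. exact (ex_RInt_continuous f a b). Qed.

Definition is_RInt_infty0 (f : R -> R) (l : R) : Prop :=
  (forall b, ex_RInt f 0 b) /\
  (forall eps, 0 < eps -> exists B, forall b, B <= b -> Rabs (RInt f 0 b - l) < eps).

Lemma is_imp_int0_unique f l1 l2 : is_imp_int0 f l1 -> is_imp_int0 f l2 -> l1 = l2.
Proof.
  intros [Hex H1] [_ H2].
  apply Rminus_diag_uniq, Rabs_eq_0.
  destruct (Rle_lt_or_eq_dec 0 (Rabs (l1 - l2)) (Rabs_pos _)) as [Hp|Hp]; [|auto].
  exfalso.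
  destruct (H1 (Rabs (l1 - l2) / 2)) as [B1 HB1]; [lra|].
  destruct (H2 (Rabs (l1 - l2) / 2)) as [B2 HB2]; [lra|].
  set (b := Rmax 0 (Rmax B1 B2)).
  destruct (Hex b (Rmax_l _ _)) as [pr].
  assert (B1 <= b) by (unfold b; eapply Rle_trans; [apply Rmax_l|apply Rmax_r]).
  assert (B2 <= b) by (unfold b; eapply Rle_trans; [apply Rmax_r|apply Rmax_r]).
  specialize (HB1 b pr H). specialize (HB2 b pr H0).
  assert (Rabs (l1 - l2) <= Rabs (RiemannInt pr - l2) + Rabs (RiemannInt pr - l1)).
  { replace (l1 - l2) with ((RiemannInt pr - l2) + - (RiemannInt pr - l1)) by ring.
    rewrite <- (Rabs_Ropp (RiemannInt pr - l1)). apply Rabs_triang. }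
  lra.
Qed.

Lemma is_RInt_infty0_is_imp_int0 f l : is_RInt_infty0 f l -> is_imp_int0 f l.
Proof.
  intros [Hex Hl]; split.
  - intros b _. constructor. apply ex_RInt_Reals_0, Hex.
  - intros eps Heps. destruct (Hl eps Heps) as [B HB]. exists B.
    intros b pr Hb. rewrite <- RInt_Reals. auto.
Qed.

Lemma ImpInt0_eq f l : is_RInt_infty0 f l -> ImpInt0 f = l.
Proof.
  intros H. apply is_RInt_infty0_is_imp_int0 in H.
  unfold ImpInt0. apply (is_imp_int0_unique f); auto.
  apply epsilon_spec. exists l; auto.
Qed.

Lemma is_RInt_infty0_plus f g a b :
  is_RInt_infty0 f a -> is_RInt_infty0 g b -> is_RInt_infty0 (fun p => f p + g p) (a + b).
Proof.
  intros [Hf Hfl] [Hg Hgl]; split.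
  - intros c. apply (ex_RInt_plus f g); auto.
  - intros eps He. destruct (Hfl (eps/2)) as [B1 H1]; [lra|].
    destruct (Hgl (eps/2)) as [B2 H2]; [lra|].
    exists (Rmax B1 B2); intros c Hc.
    specialize (H1 c (Rle_trans _ _ _ (Rmax_l _ _) Hc)).
    specialize (H2 c (Rle_trans _ _ _ (Rmax_r _ _) Hc)).
    rewrite (RInt_plus f g); auto.
    replace (plus (RInt f 0 c) (RInt g 0 c) - (a + b))
      with ((RInt f 0 c - a) + (RInt g 0 c - b)) by (unfold plus; simpl; ring).
    eapply Rle_lt_trans; [apply Rabs_triang|]. lra.
Qed.

Lemma is_RInt_infty0_scal f a k :
  is_RInt_infty0 f a -> is_RInt_infty0 (fun p => k * f p) (k * a).
Proof.
  intros [Hf Hfl]; split.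
  - intros c. apply (ex_RInt_scal f); auto.
  - intros eps He.
    assert (Hk : 0 < Rabs k + 1) by (pose proof (Rabs_pos k); lra).
    destruct (Hfl (eps / (Rabs k + 1))) as [B HB]; [apply Rdiv_lt_0_compat; auto|].
    exists B; intros c Hc. specialize (HB c Hc).
    rewrite (RInt_scal f); auto.
    replace (scal k (RInt f 0 c) - k * a) with (k * (RInt f 0 c - a))
      by (unfold scal; simpl; unfold mult; simpl; ring).
    rewrite Rabs_mult.
    apply (Rmult_lt_compat_r (Rabs k + 1)) in HB; [|lra].
    unfold Rdiv in HB. rewrite Rmult_assoc, Rinv_l in HB by lra.
    pose proof (Rabs_pos k). pose proof (Rabs_pos (RInt f 0 c - a)). nra.
Qed.

Lemma bounded_monotone_cvg (g : R -> R) (M : R) :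
  (forall a b, 0 <= a -> a <= b -> g a <= g b) -> (forall b, 0 <= b -> g b <= M) ->
  exists m, forall eps, 0 < eps -> exists B, forall b, B <= b -> Rabs (g b - m) < eps.
Proof.
  intros Hm HM.
  set (E := fun y => exists b, 0 <= b /\ y = g b).
  assert (HB : bound E) by (exists M; intros y [b [Hb ->]]; auto).
  assert (HE : exists y, E y) by (exists (g 0), 0; split; [lra|auto]).
  destruct (completeness E HB HE) as [m [Hub Hlub]].
  exists m; intros eps Heps.
  assert (exists b0, 0 <= b0 /\ m - eps < g b0) as [b0 [Hb0 Hg0]].
  { apply Classical_Prop.NNPP; intro Hn.
    assert (m <= m - eps); [|lra].
    apply Hlub; intros y [b [Hb ->]].
    apply Rnot_lt_le; intro. apply Hn; exists b; auto. }
  exists b0; intros b Hb.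
  assert (g b0 <= g b) by (apply Hm; lra).
  assert (g b <= m) by (apply Hub; exists b; split; [lra|auto]).
  rewrite Rabs_left1; lra.
Qed.

Lemma RInt_div_1p_sq K b : 0 <= b -> RInt (fun p => K / (1 + p)^2) 0 b = K - K / (1 + b).
Proof.
  intros Hb. apply is_RInt_unique.
  replace (K - K / (1 + b)) with (minus (- K / (1 + b)) (- K / (1 + 0)))
    by (unfold minus, plus, opp; simpl; field; lra).
  apply (is_RInt_derive (fun p => - K / (1 + p))).
  - intros x Hx. rewrite Rmin_left, Rmax_right in Hx by lra.
    auto_derive; [lra|]. field. lra.
  - intros x Hx. rewrite Rmin_left, Rmax_right in Hx by lra.
    apply ex_derive_continuous_R. auto_derive. intro; nra.
Qed.

Lemma ex_RInt_div_1p_sq K a b : 0 <= a -> 0 <= b -> ex_RInt (fun p => K / (1 + p)^2) a b.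
Proof.
  intros Ha Hb. apply ex_RInt_continuous_R. intros z Hz.
  assert (0 <= Rmin a b) by (apply Rmin_glb; auto).
  apply ex_derive_continuous_R. auto_derive. intro; nra.
Qed.

Lemma div_1p_lt K eps b : 0 <= K -> 0 < eps -> 0 <= b -> K / eps <= b -> K / (1 + b) < eps.
Proof.
  intros HK Heps Hb HKb. apply Rmult_lt_reg_r with (1 + b); [lra|].
  unfold Rdiv in *. rewrite Rmult_assoc, Rinv_l by lra.
  apply Rmult_le_compat_r with (r := eps) in HKb; [|lra].
  rewrite Rmult_assoc, Rinv_l in HKb by lra. nra.
Qed.

Lemma abs_RInt_dominated (f : R -> R) (K : R) : (forall p, continuous f p) ->
  (forall p, 0 <= p -> Rabs (f p) <= K / (1 + p)^2) ->
  forall b, 0 <= b -> Rabs (RInt f 0 b) <= K - K / (1 + b).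
Proof.
  intros Hc Hf b Hb.
  eapply Rle_trans; [apply abs_RInt_le; auto; apply ex_RInt_continuous_R; auto|].
  rewrite <- RInt_div_1p_sq by auto.
  apply RInt_le; auto.
  - apply ex_RInt_continuous_R. intros z _.
    apply (continuous_comp f Rabs); auto. apply continuous_Rabs.
  - apply ex_RInt_div_1p_sq; lra.
  - intros x Hx. apply Hf; lra.
Qed.

(* [\int_0^b (K/(1+p)^2 - f)] is nondecreasing in [b] and bounded, hence convergent. *)
Lemma is_RInt_infty0_dominated (f : R -> R) (K : R) : (forall p, continuous f p) ->
  (forall p, 0 <= p -> Rabs (f p) <= K / (1 + p)^2) -> exists l, is_RInt_infty0 f l.
Proof.
  intros Hc Hf.
  assert (HK : 0 <= K).
  { pose proof (Hf 0 (Rle_refl _)). pose proof (Rabs_pos (f 0)).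
    replace ((1 + 0) ^ 2) with 1 in H by ring. lra. }
  assert (HKb : forall b, 0 <= b -> 0 <= K / (1 + b)) by (intros; apply Rdiv_le_0_compat; lra).
  assert (Hexf : forall a b, ex_RInt f a b) by (intros; apply ex_RInt_continuous_R; auto).
  set (g := fun p => K / (1 + p)^2 - f p).
  assert (Hexg : forall a b, 0 <= a -> 0 <= b -> ex_RInt g a b).
  { intros a b Ha Hb. apply (ex_RInt_minus (V := R_NormedModule)); auto. apply ex_RInt_div_1p_sq; auto. }
  set (J := fun b => RInt g 0 b).
  assert (HJ : forall b, 0 <= b -> J b = K - K / (1 + b) - RInt f 0 b).
  { intros b Hb. unfold J, g.
    rewrite (RInt_minus (V := R_CompleteNormedModule)), RInt_div_1p_sq; auto.
    apply ex_RInt_div_1p_sq; lra. }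
  destruct (bounded_monotone_cvg J (2 * K)) as [m Hm].
  - intros a b Ha Hab. unfold J.
    rewrite <- (RInt_Chasles g 0 a b) by (apply Hexg; lra).
    assert (0 <= RInt g a b); [|unfold plus; simpl; lra].
    apply RInt_ge_0; auto. apply Hexg; lra.
    intros x Hx. specialize (Hf x ltac:(lra)). apply Rabs_le_between in Hf. unfold g. lra.
  - intros b Hb. rewrite HJ by auto.
    pose proof (abs_RInt_dominated f K Hc Hf b Hb) as HI.
    pose proof (HKb b Hb). apply Rabs_le_between in HI. lra.
  - exists (K - m). split; [auto|].
    intros eps Heps. destruct (Hm (eps / 2)) as [B HB]; [lra|].
    exists (Rmax B (Rmax 0 (K / (eps / 2)))). intros b Hbb.
    pose proof (Rmax_l B (Rmax 0 (K / (eps / 2)))). pose proof (Rmax_l 0 (K / (eps / 2))).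
    pose proof (Rmax_r 0 (K / (eps / 2))). pose proof (Rmax_r B (Rmax 0 (K / (eps / 2)))).
    specialize (HB b ltac:(lra)). rewrite HJ in HB by lra.
    pose proof (div_1p_lt K (eps / 2) b HK ltac:(lra) ltac:(lra) ltac:(lra)).
    pose proof (HKb b ltac:(lra)).
    replace (RInt f 0 b - (K - m)) with (- (K - K / (1 + b) - RInt f 0 b - m) - K / (1 + b)) by ring.
    eapply Rle_lt_trans; [apply Rabs_triang|]. rewrite !Rabs_Ropp.
    rewrite (Rabs_right (K / (1 + b))) by lra. lra.
Qed.

Lemma ex_RInt_of_is_RInt_infty0 f l a b : is_RInt_infty0 f l -> ex_RInt f a b.
Proof.
  intros [He _]. apply (ex_RInt_Chasles f a 0 b); auto. apply ex_RInt_swap; auto.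
Qed.

Lemma RInt_le_is_RInt_infty0 (f : R -> R) l : is_RInt_infty0 f l ->
  (forall p, 0 <= p -> 0 <= f p) -> forall b, 0 <= b -> RInt f 0 b <= l.
Proof.
  intros Hi Hf b Hb. pose proof Hi as [_ Hl].
  apply Rnot_lt_le; intro Hlt.
  destruct (Hl (RInt f 0 b - l)) as [B HB]; [lra|].
  specialize (HB (Rmax b B) (Rmax_r _ _)). pose proof (Rmax_l b B).
  assert (RInt f 0 b <= RInt f 0 (Rmax b B)).
  { rewrite <- (RInt_Chasles f 0 b (Rmax b B)) by (apply (ex_RInt_of_is_RInt_infty0 f l); auto).
    assert (0 <= RInt f b (Rmax b B)); [|unfold plus; simpl; lra].
    apply RInt_ge_0; auto. apply (ex_RInt_of_is_RInt_infty0 f l); auto.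
    intros x Hx; apply Hf; lra. }
  apply Rabs_def2 in HB. lra.
Qed.

Lemma is_RInt_infty0_ge (f : R -> R) l M B0 :
  is_RInt_infty0 f l -> (forall b, B0 <= b -> M <= RInt f 0 b) -> M <= l.
Proof.
  intros [_ Hl] Hb. apply Rnot_lt_le; intro Hlt.
  destruct (Hl (M - l)) as [B HB]; [lra|].
  specialize (HB (Rmax B B0) (Rmax_l _ _)). specialize (Hb (Rmax B B0) (Rmax_r _ _)).
  apply Rabs_def2 in HB. lra.
Qed.

Lemma is_RInt_infty0_le (f : R -> R) l M c B0 : is_RInt_infty0 f l -> 0 < B0 -> 0 <= c ->
  (forall b, B0 <= b -> RInt f 0 b <= M + c / b) -> l <= M.
Proof.
  intros [_ Hl] HB0 Hc Hb. apply Rnot_lt_le; intro Hlt.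
  set (eps := (l - M) / 2).
  assert (Heps : 0 < eps) by (unfold eps; lra).
  destruct (Hl eps Heps) as [B HB].
  set (b := Rmax B (Rmax B0 (c / eps))).
  assert (B <= b) by apply Rmax_l.
  assert (B0 <= b) by (unfold b; eapply Rle_trans; [apply Rmax_l|apply Rmax_r]).
  assert (c / eps <= b) by (unfold b; eapply Rle_trans; [apply Rmax_r|apply Rmax_r]).
  specialize (HB b H). specialize (Hb b H0).
  assert (c / b <= eps).
  { apply Rmult_le_reg_r with b; [lra|]. unfold Rdiv. rewrite Rmult_assoc, Rinv_l, Rmult_1_r by lra.
    apply Rmult_le_compat_r with (r := eps) in H1; [|lra].
    unfold Rdiv in H1; rewrite Rmult_assoc, Rinv_l, Rmult_1_r in H1 by lra. lra. }
  apply Rabs_def2 in HB. unfold eps in *. lra.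
Qed.

Lemma is_RInt_infty0_dominated_bound (f : R -> R) (K l : R) : (forall p, continuous f p) ->
  (forall p, 0 <= p -> Rabs (f p) <= K / (1 + p)^2) -> is_RInt_infty0 f l -> Rabs l <= K.
Proof.
  intros Hc Hf Hl.
  assert (HI : forall b, 1 <= b -> - K <= RInt f 0 b <= K).
  { intros b Hb. pose proof (abs_RInt_dominated f K Hc Hf b ltac:(lra)) as H.
    assert (0 <= K / (1 + b)).
    { pose proof (Hf 0 (Rle_refl _)). pose proof (Rabs_pos (f 0)).
      replace ((1 + 0) ^ 2) with 1 in H0 by ring. apply Rdiv_le_0_compat; lra. }
    apply Rabs_le_between in H. lra. }
  apply Rabs_le. split.
  - apply (is_RInt_infty0_ge f l (- K) 1 Hl). intros b Hb. apply HI; lra.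
  - apply (is_RInt_infty0_le f l K 0 1 Hl); try lra.
    intros b Hb. rewrite Rdiv_0_l, Rplus_0_r. apply HI; lra.
Qed.

(** * The integrand family and differentiation under the integral *)

Definition weight (p : R) := p / (1 + p^2)^2.

Lemma weight_bound p : 0 <= p -> 0 <= weight p <= 2 / (1 + p)^2.
Proof.
  intros Hp. unfold weight. split.
  - apply Rdiv_le_0_compat; [lra| apply pow_lt; nra].
  - apply Rmult_le_reg_r with ((1 + p^2)^2 * (1 + p)^2); [apply Rmult_lt_0_compat; apply pow_lt; nra|].
    replace (p / (1 + p ^ 2) ^ 2 * ((1 + p ^ 2) ^ 2 * (1 + p) ^ 2)) with (p * (1 + p)^2) by (field; nra).
    replace (2 / (1 + p) ^ 2 * ((1 + p ^ 2) ^ 2 * (1 + p) ^ 2)) with (2 * (1 + p^2)^2) by (field; nra).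
    nra.
Qed.

Lemma pow_div_pow_succ_le1 j k y : 0 <= y -> (j <= k)%nat -> 0 <= y^j / (1 + y)^k <= 1.
Proof.
  intros Hy Hjk. split.
  - apply Rdiv_le_0_compat; [apply pow_le; lra| apply pow_lt; lra].
  - apply Rmult_le_reg_r with ((1 + y)^k); [apply pow_lt; lra|].
    unfold Rdiv; rewrite Rmult_assoc, Rinv_l, Rmult_1_r, Rmult_1_l by (apply pow_nonzero; lra).
    apply Rle_trans with ((1 + y)^j); [apply pow_incr; lra| apply Rle_pow; auto; lra].
Qed.

Lemma pow_even_ge0 n p : 0 <= p ^ (2 * n).
Proof. rewrite pow_mult. apply pow_le. nra. Qed.

(* [kern n k] is [(-1)^k / (k+1)!] times the [k]-th [s]-derivative of [kern n 0],
   the density of the conformal factor. *)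
Definition kern (n k : nat) (s p : R) :=
  weight p * (p ^ (2 * n)) ^ S k / (1 + s * p ^ (2 * n)) ^ (k + 2).

Lemma kern_continuous n k s p : 0 <= s -> continuous (kern n k s) p.
Proof.
  intros Hs. apply ex_derive_continuous_R. unfold kern, weight. auto_derive.
  pose proof (pow_even_ge0 n p).
  change (n + (n + 0))%nat with (2 * n)%nat.
  repeat split; try apply pow_nonzero; nra.
Qed.

Lemma kern_bound n k s p : 0 < s -> 0 <= p -> 0 <= kern n k s p <= weight p / s ^ S k.
Proof.
  intros Hs Hp. pose proof (pow_even_ge0 n p). pose proof (weight_bound p Hp).
  set (x := p ^ (2 * n)) in *.
  assert (Hsk : 0 < s ^ S k) by (apply pow_lt; lra).
  replace (kern n k s p) with (weight p / s ^ S k * ((s * x) ^ S k / (1 + s * x) ^ (k + 2))).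
  2:{ unfold kern. fold x. rewrite Rpow_mult_distr. field.
      split; [apply pow_nonzero; nra| lra]. }
  destruct (pow_div_pow_succ_le1 (S k) (k + 2) (s * x)) as [H1 H2]; [nra|lia|].
  assert (0 <= weight p / s ^ S k) by (apply Rdiv_le_0_compat; lra).
  split; nra.
Qed.

Definition Ik n k s := ImpInt0 (kern n k s).

Lemma kern_is_RInt_infty0 n k s : 0 < s -> is_RInt_infty0 (kern n k s) (Ik n k s).
Proof.
  intros Hs.
  destruct (is_RInt_infty0_dominated (kern n k s) (2 / s ^ S k)) as [l Hl].
  - intros p. apply kern_continuous. lra.
  - intros p Hp. destruct (kern_bound n k s p Hs Hp) as [H0 H1].
    destruct (weight_bound p Hp) as [_ Hw].
    assert (Hsk : 0 < s ^ S k) by (apply pow_lt; lra).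
    rewrite Rabs_right by lra. eapply Rle_trans; [exact H1|].
    replace (2 / s ^ S k / (1 + p) ^ 2) with (2 / (1 + p) ^ 2 / s ^ S k) by (field; split; lra).
    unfold Rdiv. apply Rmult_le_compat_r; [left; apply Rinv_0_lt_compat; lra|]. exact Hw.
  - unfold Ik. now rewrite (ImpInt0_eq _ l).
Qed.

Definition inv_pow_taylor_bound (m : nat) (C : R) := forall X d, 0 < X -> Rabs d <= X / 2 ->
  Rabs (/ (X + d) ^ m - / X ^ m + INR m * d / X ^ S m) <= C * d ^ 2 / X ^ S (S m).

Lemma inv_pow_taylor_bound_nonneg m C : inv_pow_taylor_bound m C -> 0 <= C.
Proof.
  intros HC. specialize (HC 1 (/ 2) ltac:(lra) ltac:(rewrite Rabs_right; lra)).
  replace (C * (/ 2) ^ 2 / 1 ^ S (S m)) with (C / 4) in HC by (rewrite pow1; field).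
  pose proof (Rle_trans _ _ _ (Rabs_pos _) HC). lra.
Qed.

Lemma abs_div_le a b c e : 0 < e -> e <= b -> Rabs a <= c -> Rabs (a / b) <= c / e.
Proof.
  intros He Heb Ha. unfold Rdiv. rewrite Rabs_mult, Rabs_inv, (Rabs_right b) by lra.
  apply Rmult_le_compat; try apply Rabs_pos; auto.
  - left; apply Rinv_0_lt_compat; lra.
  - apply Rinv_le_contravar; lra.
Qed.

Lemma inv_pow_taylor_bound_2 : inv_pow_taylor_bound 2 16.
Proof.
  intros X d HX Hd. apply Rabs_le_between in Hd.
  replace (/ (X + d) ^ 2 - / X ^ 2 + INR 2 * d / X ^ 3)
    with ((d ^ 2 * (3 * X + 2 * d)) / (X ^ 3 * (X + d) ^ 2)) by (simpl; field; lra).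
  replace (16 * d ^ 2 / X ^ 4) with ((4 * X * d ^ 2) / (X ^ 3 * (X / 2) ^ 2)) by (field; lra).
  apply abs_div_le.
  - apply Rmult_lt_0_compat; [apply pow_lt; lra| nra].
  - apply Rmult_le_compat_l; [left; apply pow_lt; lra| nra].
  - rewrite Rabs_mult, (Rabs_right (d ^ 2)) by nra.
    rewrite Rmult_comm. apply Rmult_le_compat_r; [nra|].
    apply Rabs_le; split; lra.
Qed.

Lemma inv_pow_taylor_bound_3 : inv_pow_taylor_bound 3 88.
Proof.
  intros X d HX Hd. apply Rabs_le_between in Hd.
  replace (/ (X + d) ^ 3 - / X ^ 3 + INR 3 * d / X ^ 4)
    with ((d ^ 2 * (6 * X ^ 2 + 8 * X * d + 3 * d ^ 2)) / (X ^ 4 * (X + d) ^ 3)) by (simpl; field; lra).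
  replace (88 * d ^ 2 / X ^ 5) with ((11 * X ^ 2 * d ^ 2) / (X ^ 4 * (X / 2) ^ 3)) by (field; lra).
  apply abs_div_le.
  - apply Rmult_lt_0_compat; apply pow_lt; lra.
  - apply Rmult_le_compat_l; [left; apply pow_lt; lra| apply pow_incr; lra].
  - rewrite Rabs_mult, (Rabs_right (d ^ 2)) by nra.
    rewrite Rmult_comm. apply Rmult_le_compat_r; [nra|].
    rewrite Rabs_right by nra. nra.
Qed.

Lemma kern_remainder n k C s h p : inv_pow_taylor_bound (k + 2) C -> 0 < s -> Rabs h <= s / 2 ->
  0 <= p -> Rabs (kern n k (s + h) p - kern n k s p + h * INR (k + 2) * kern n (S k) s p)
             <= C * h ^ 2 * weight p / s ^ (k + 3).
Proof.
  intros HC Hs Hh Hp. unfold kern.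
  pose proof (pow_even_ge0 n p) as Hx. destruct (weight_bound p Hp) as [Hw _].
  set (x := p ^ (2 * n)) in *. set (w := weight p) in *.
  assert (HX : 0 < 1 + s * x) by nra.
  assert (Hd : Rabs (h * x) <= (1 + s * x) / 2).
  { rewrite Rabs_mult, (Rabs_right x) by lra. nra. }
  replace (1 + (s + h) * x) with (1 + s * x + h * x) by ring.
  replace (x ^ S (S k)) with (x ^ S k * x) by (simpl; ring).
  replace (w * x ^ S k / (1 + s * x + h * x) ^ (k + 2) - w * x ^ S k / (1 + s * x) ^ (k + 2)
           + h * INR (k + 2) * (w * (x ^ S k * x) / (1 + s * x) ^ (S k + 2)))
    with (w * x ^ S k * (/ (1 + s * x + h * x) ^ (k + 2) - / (1 + s * x) ^ (k + 2)
                         + INR (k + 2) * (h * x) / (1 + s * x) ^ S (k + 2)))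
    by (unfold Rdiv; simpl Nat.add; ring).
  assert (Hwx : 0 <= w * x ^ S k) by (apply Rmult_le_pos; [|apply pow_le]; lra).
  rewrite Rabs_mult, (Rabs_right (w * x ^ S k)) by lra.
  eapply Rle_trans; [apply Rmult_le_compat_l; [exact Hwx| apply HC; auto]|].
  assert (Hsk : 0 < s ^ (k + 3)) by (apply pow_lt; lra).
  replace (w * x ^ S k * (C * (h * x) ^ 2 / (1 + s * x) ^ S (S (k + 2))))
    with (C * h ^ 2 * w / s ^ (k + 3) * ((s * x) ^ (k + 3) / (1 + s * x) ^ S (S (k + 2)))).
  2:{ rewrite Rpow_mult_distr.
      replace (x ^ (k + 3)) with (x ^ S k * x ^ 2) by (rewrite <- pow_add; f_equal; lia).
      field. split; [apply pow_nonzero|]; lra. }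
  destruct (pow_div_pow_succ_le1 (k + 3) (S (S (k + 2))) (s * x)) as [H0 H1]; [nra|lia|].
  pose proof (inv_pow_taylor_bound_nonneg _ _ HC).
  assert (0 <= C * h ^ 2 * w / s ^ (k + 3))
    by (apply Rdiv_le_0_compat; [apply Rmult_le_pos; [apply Rmult_le_pos|]; nra| lra]).
  nra.
Qed.

Lemma derivable_pt_lim_quadratic_remainder (f : R -> R) x l C d : 0 < d -> 0 <= C ->
  (forall h, Rabs h <= d -> Rabs (f (x + h) - f x - h * l) <= C * h ^ 2) ->
  derivable_pt_lim f x l.
Proof.
  intros Hd HC Hr eps Heps.
  assert (Hm : 0 < Rmin d (eps / (C + 1))) by (apply Rmin_pos; [lra| apply Rdiv_lt_0_compat; lra]).
  exists (mkposreal _ Hm). intros h Hh0 Hh. simpl in Hh.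
  assert (Hh1 : Rabs h <= d) by (pose proof (Rmin_l d (eps / (C + 1))); lra).
  assert (Hh2 : Rabs h < eps / (C + 1)) by (pose proof (Rmin_r d (eps / (C + 1))); lra).
  specialize (Hr h Hh1).
  replace ((f (x + h) - f x) / h - l) with ((f (x + h) - f x - h * l) / h) by (field; auto).
  assert (Hah : 0 < Rabs h) by (apply Rabs_pos_lt; auto).
  unfold Rdiv. rewrite Rabs_mult, Rabs_inv.
  apply Rmult_lt_reg_r with (Rabs h); auto.
  rewrite Rmult_assoc, Rinv_l, Rmult_1_r by lra.
  replace (h ^ 2) with (Rabs h * Rabs h) in Hr by (rewrite <- Rabs_mult, Rabs_right; [ring| nra]).
  apply Rmult_lt_compat_r with (r := C + 1) in Hh2; [|lra].
  unfold Rdiv in Hh2; rewrite Rmult_assoc, Rinv_l in Hh2 by lra.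
  nra.
Qed.

Lemma Ik_derivable n k C s : inv_pow_taylor_bound (k + 2) C -> 0 < s ->
  derivable_pt_lim (Ik n k) s (- INR (k + 2) * Ik n (S k) s).
Proof.
  intros HC Hs. pose proof (inv_pow_taylor_bound_nonneg _ _ HC) as HC0.
  assert (Hsk : 0 < s ^ (k + 3)) by (apply pow_lt; lra).
  apply (derivable_pt_lim_quadratic_remainder _ _ _ (2 * C / s ^ (k + 3)) (s / 2)); [lra| |].
  { apply Rdiv_le_0_compat; lra. }
  intros h Hh.
  assert (Hsh : 0 < s + h) by (apply Rabs_le_between in Hh; lra).
  assert (Hrem : is_RInt_infty0
            (fun p => kern n k (s + h) p + -1 * kern n k s p + h * INR (k + 2) * kern n (S k) s p)
                   (Ik n k (s + h) + -1 * Ik n k s + h * INR (k + 2) * Ik n (S k) s)).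
  { apply is_RInt_infty0_plus; [apply is_RInt_infty0_plus|].
    - apply kern_is_RInt_infty0; lra.
    - apply is_RInt_infty0_scal, kern_is_RInt_infty0; lra.
    - apply is_RInt_infty0_scal, kern_is_RInt_infty0; lra. }
  replace (Ik n k (s + h) - Ik n k s - h * (- INR (k + 2) * Ik n (S k) s))
    with (Ik n k (s + h) + -1 * Ik n k s + h * INR (k + 2) * Ik n (S k) s) by ring.
  replace (2 * C / s ^ (k + 3) * h ^ 2) with (2 * (C * h ^ 2 / s ^ (k + 3))) by (field; lra).
  refine (is_RInt_infty0_dominated_bound _ _ _ _ _ Hrem).
  - intros p.
    apply (continuous_plus (V := R_NormedModule)); [apply (continuous_plus (V := R_NormedModule))|].
    + apply kern_continuous; lra.
    + apply (continuous_scal_r (K := R_AbsRing) (V := R_NormedModule)), kern_continuous; lra.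
    + apply (continuous_scal_r (K := R_AbsRing) (V := R_NormedModule)), kern_continuous; lra.
  - intros p Hp; cbv beta.
    replace (kern n k (s + h) p + -1 * kern n k s p) with (kern n k (s + h) p - kern n k s p) by ring.
    eapply Rle_trans; [apply (kern_remainder n k C); auto; lra|].
    destruct (weight_bound p Hp) as [_ Hw].
    assert (0 <= C * h ^ 2 / s ^ (k + 3)) by (apply Rdiv_le_0_compat; nra).
    replace (C * h ^ 2 * weight p / s ^ (k + 3)) with (C * h ^ 2 / s ^ (k + 3) * weight p) by (field; lra).
    replace (2 * (C * h ^ 2 / s ^ (k + 3)) / (1 + p) ^ 2) with (C * h ^ 2 / s ^ (k + 3) * (2 / (1 + p) ^ 2))
      by (field; nra).
    apply Rmult_le_compat_l; auto.
Qed.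

(** * The conformal factor and the curvature *)

Lemma Der_eq f x l : derivable_pt_lim f x l -> Der f x = l.
Proof.
  intros H. unfold Der. apply (uniqueness_limite f x); auto.
  apply epsilon_spec. exists l; auto.
Qed.

Lemma locally_pos (f : R -> R) x : continuous f x -> 0 < f x -> locally x (fun y => 0 < f y).
Proof. intros Hc Hp. exact (Hc _ (open_gt 0 _ Hp)). Qed.

Section RadialDerivatives.
Variables G dG d2G : R -> R.
Hypothesis HG : forall s, 0 < s -> is_derive G s (dG s).
Hypothesis HdG : forall s, 0 < s -> is_derive dG s (d2G s).

Lemma is_derive_sq_comp c x : 0 < x ^ 2 + c ->
  is_derive (fun y => G (y ^ 2 + c)) x (2 * x * dG (x ^ 2 + c)).
Proof.
  intros Hx. apply (is_derive_comp G (fun y => y ^ 2 + c)); auto.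
  auto_derive; auto. ring.
Qed.

Lemma Der_sq_comp c x : 0 < x ^ 2 + c -> Der (fun y => G (y ^ 2 + c)) x = 2 * x * dG (x ^ 2 + c).
Proof. intros Hx. apply Der_eq, is_derive_Reals, is_derive_sq_comp; auto. Qed.

Lemma Der_Der_sq_comp c x : 0 < x ^ 2 + c ->
  Der (fun y => Der (fun z => G (z ^ 2 + c)) y) x = 2 * dG (x ^ 2 + c) + 4 * x ^ 2 * d2G (x ^ 2 + c).
Proof.
  intros Hx. apply Der_eq, is_derive_Reals.
  apply (is_derive_ext_loc (fun y => 2 * y * dG (y ^ 2 + c))).
  - assert (Hc : continuous (fun y => y ^ 2 + c) x)
      by (apply ex_derive_continuous_R; auto_derive; auto).
    apply (filter_imp (fun y => 0 < y ^ 2 + c)); [|exact (locally_pos _ _ Hc Hx)].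
    intros y Hy. symmetry. apply Der_sq_comp; auto.
  - assert (Hd : is_derive (fun y => dG (y ^ 2 + c)) x (2 * x * d2G (x ^ 2 + c))).
    { apply (is_derive_comp dG (fun y => y ^ 2 + c)); auto. auto_derive; auto. ring. }
    replace (2 * dG (x ^ 2 + c) + 4 * x ^ 2 * d2G (x ^ 2 + c))
      with (2 * dG (x ^ 2 + c) + 2 * x * (2 * x * d2G (x ^ 2 + c))) by ring.
    apply (is_derive_mult (fun y => 2 * y) (fun y => dG (y ^ 2 + c))); auto.
    + auto_derive; auto. ring.
    + intros; apply Rmult_comm.
Qed.

End RadialDerivatives.

Definition Fc n s := 32 * PI * Ik n 0 s.
Definition dFc n s := - 64 * PI * Ik n 1 s.
Definition d2Fc n s := 192 * PI * Ik n 2 s.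

Lemma conf_eq n u v : conf n u v = Fc n (u ^ 2 + v ^ 2).
Proof.
  unfold conf, Fc, Ik. do 2 f_equal. apply functional_extensionality. intros p.
  unfold kern, weight. rewrite Nat.add_comm. simpl pow. unfold Rdiv. rewrite Rinv_mult. ring.
Qed.

Lemma Fc_derivable n s : 0 < s -> is_derive (Fc n) s (dFc n s).
Proof.
  intros Hs. apply is_derive_Reals. unfold Fc, dFc.
  replace (- 64 * PI * Ik n 1 s) with (32 * PI * (- INR (0 + 2) * Ik n 1 s)) by (simpl; ring).
  apply derivable_pt_lim_scal, (Ik_derivable n 0 16); auto. exact inv_pow_taylor_bound_2.
Qed.

Lemma dFc_derivable n s : 0 < s -> is_derive (dFc n) s (d2Fc n s).
Proof.
  intros Hs. apply is_derive_Reals. unfold dFc, d2Fc.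
  replace (192 * PI * Ik n 2 s) with (- 64 * PI * (- INR (1 + 2) * Ik n 2 s)) by (simpl; ring).
  apply derivable_pt_lim_scal, (Ik_derivable n 1 88); auto. exact inv_pow_taylor_bound_3.
Qed.

Lemma kern0_ge n s c p : 0 <= p <= 1 -> 0 <= s * p ^ (2 * n) <= c ->
  p ^ (2 * n + 1) / (4 * (1 + c) ^ 2) <= kern n 0 s p.
Proof.
  intros Hp Hc.
  assert (Hx : 0 <= p ^ (2 * n) <= 1)
    by (split; [apply pow_even_ge0| rewrite <- (pow1 (2 * n)); apply pow_incr; lra]).
  unfold kern, weight. rewrite pow_add, pow_1.
  set (x := p ^ (2 * n)) in *.
  replace (p / (1 + p ^ 2) ^ 2 * x ^ 1 / (1 + s * x) ^ (0 + 2))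
    with (x * p / ((1 + p ^ 2) ^ 2 * (1 + s * x) ^ 2)) by (simpl; field; nra).
  unfold Rdiv. apply Rmult_le_compat_l; [nra|].
  apply Rinv_le_contravar; [apply Rmult_lt_0_compat; apply pow_lt; nra|].
  assert ((1 + s * x) ^ 2 <= (1 + c) ^ 2) by (apply pow_incr; lra).
  assert ((1 + p ^ 2) ^ 2 <= 4) by (assert (p ^ 2 <= 1) by nra; nra).
  assert (0 <= (1 + s * x) ^ 2) by apply pow2_ge_0. nra.
Qed.

Lemma RInt_scal_pow k m a : RInt (fun p => k * p ^ m) 0 a = k * (a ^ S m / INR (S m)).
Proof.
  apply is_RInt_unique.
  replace (k * (a ^ S m / INR (S m))) with (scal k (a ^ S m / INR (S m) - 0 ^ S m / INR (S m)))
    by (rewrite pow_i by lia; unfold scal; simpl; unfold mult; simpl; unfold Rdiv; ring).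
  apply (is_RInt_scal (fun p => p ^ m)), is_RInt_pow.
Qed.

Lemma Ik0_ge n s c a : 0 < s -> 0 <= a <= 1 -> s * a ^ (2 * n) <= c ->
  / (4 * (1 + c) ^ 2) * (a ^ S (2 * n + 1) / INR (S (2 * n + 1))) <= Ik n 0 s.
Proof.
  intros Hs Ha Hc.
  pose proof (kern_is_RInt_infty0 n 0 s Hs) as HI.
  apply Rle_trans with (RInt (kern n 0 s) 0 a).
  - rewrite <- RInt_scal_pow.
    apply RInt_le; [lra| apply ex_RInt_continuous_R; intros; apply ex_derive_continuous_R; auto_derive; auto
                   | apply (ex_RInt_of_is_RInt_infty0 _ _ _ _ HI)|].
    intros p Hp. rewrite Rmult_comm. apply kern0_ge; [lra|].
    assert (p ^ (2 * n) <= a ^ (2 * n)) by (apply pow_incr; lra).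
    pose proof (pow_even_ge0 n p). split; nra.
  - apply (RInt_le_is_RInt_infty0 _ _ HI); [|lra].
    intros p Hp. apply kern_bound; auto.
Qed.

Lemma Fc_pos n s : 0 < s -> 0 < Fc n s.
Proof.
  intros Hs. unfold Fc.
  pose proof (Ik0_ge n s s 1 Hs ltac:(lra) ltac:(rewrite pow1; lra)) as H.
  rewrite pow1 in H.
  assert (0 < / (4 * (1 + s) ^ 2) * (1 / INR (S (2 * n + 1)))).
  { apply Rmult_lt_0_compat; [apply Rinv_0_lt_compat, Rmult_lt_0_compat; [lra| apply pow_lt; lra]|].
    apply Rdiv_lt_0_compat; [lra| apply lt_0_INR; lia]. }
  pose proof PI_RGT_0. nra.
Qed.

Definition dlnFc n s := dFc n s / Fc n s.
Definition d2lnFc n s := (d2Fc n s * Fc n s - dFc n s ^ 2) / Fc n s ^ 2.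

Lemma lnFc_derivable n s : 0 < s -> is_derive (fun s => ln (Fc n s)) s (dlnFc n s).
Proof.
  intros Hs. pose proof (Fc_pos n s Hs). pose proof (Fc_derivable n s Hs).
  unfold dlnFc. auto_derive.
  - split; [exists (dFc n s); auto| lra].
  - replace (Derive (fun x => Fc n x) s) with (dFc n s) by (symmetry; now apply is_derive_unique).
    field. lra.
Qed.

Lemma dlnFc_derivable n s : 0 < s -> is_derive (dlnFc n) s (d2lnFc n s).
Proof.
  intros Hs. pose proof (Fc_pos n s Hs).
  pose proof (Fc_derivable n s Hs). pose proof (dFc_derivable n s Hs).
  unfold dlnFc, d2lnFc. auto_derive.
  - repeat split; [exists (d2Fc n s); auto| exists (dFc n s); auto| lra].
  - replace (Derive (fun x => Fc n x) s) with (dFc n s) by (symmetry; now apply is_derive_unique).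
    replace (Derive (fun x => dFc n x) s) with (d2Fc n s) by (symmetry; now apply is_derive_unique).
    field. lra.
Qed.

Lemma d_u_conf n u v : 0 < u ^ 2 + v ^ 2 -> d_u (conf n) u v = 2 * u * dFc n (u ^ 2 + v ^ 2).
Proof.
  intros Hs. unfold d_u.
  replace (fun s => conf n s v) with (fun s => Fc n (s ^ 2 + v ^ 2))
    by (apply functional_extensionality; intros; symmetry; apply conf_eq).
  apply (Der_sq_comp (Fc n)); auto. apply Fc_derivable.
Qed.

Lemma d_v_conf n u v : 0 < u ^ 2 + v ^ 2 -> d_v (conf n) u v = 2 * v * dFc n (u ^ 2 + v ^ 2).
Proof.
  intros Hs. unfold d_v. rewrite Rplus_comm in *.
  replace (fun s => conf n u s) with (fun s => Fc n (s ^ 2 + u ^ 2))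
    by (apply functional_extensionality; intros; rewrite conf_eq; f_equal; ring).
  apply (Der_sq_comp (Fc n)); auto. apply Fc_derivable.
Qed.

Lemma gauss_K_eq n u v : 0 < u ^ 2 + v ^ 2 ->
  gauss_K n u v = - (4 * dlnFc n (u ^ 2 + v ^ 2) + 4 * (u ^ 2 + v ^ 2) * d2lnFc n (u ^ 2 + v ^ 2))
                  / (2 * Fc n (u ^ 2 + v ^ 2)).
Proof.
  intros Hs. unfold gauss_K, d_u, d_v, lnconf. rewrite conf_eq.
  replace (fun s => Der (fun s0 => ln (conf n s0 v)) s) with
          (fun s => Der (fun s0 => ln (Fc n (s0 ^ 2 + v ^ 2))) s)
    by (apply functional_extensionality; intros; f_equal;
        apply functional_extensionality; intros; now rewrite conf_eq).
  replace (fun s => Der (fun s0 => ln (conf n u s0)) s) with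
          (fun s => Der (fun s0 => ln (Fc n (s0 ^ 2 + u ^ 2))) s)
    by (apply functional_extensionality; intros; f_equal;
        apply functional_extensionality; intros; rewrite conf_eq; do 2 f_equal; ring).
  assert (HD : forall c x, 0 < x ^ 2 + c ->
            Der (fun y => Der (fun z => ln (Fc n (z ^ 2 + c))) y) x
            = 2 * dlnFc n (x ^ 2 + c) + 4 * x ^ 2 * d2lnFc n (x ^ 2 + c)).
  { intros c x Hx. apply (Der_Der_sq_comp (fun s => ln (Fc n s))); auto.
    - apply lnFc_derivable.
    - apply dlnFc_derivable. }
  rewrite !HD by lra. rewrite (Rplus_comm (v ^ 2)). f_equal. ring.
Qed.

(** * Scaling estimates *)

Lemma RInt_inv_pow m a b : (1 <= m)%nat -> 0 < a <= b ->
  RInt (fun p => / p ^ S m) a b = (/ a ^ m - / b ^ m) / INR m.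
Proof.
  intros Hm Hab. apply is_RInt_unique.
  assert (HI : INR m <> 0) by (apply not_0_INR; lia).
  replace ((/ a ^ m - / b ^ m) / INR m) with (minus (- / (INR m * b ^ m)) (- / (INR m * a ^ m))).
  2:{ unfold minus, plus, opp; simpl. field.
      split; [apply pow_nonzero; lra|]. split; [apply pow_nonzero; lra| auto]. }
  apply (is_RInt_derive (fun p => - / (INR m * p ^ m))).
  - intros x Hx. rewrite Rmin_left, Rmax_right in Hx by lra.
    auto_derive; [apply Rmult_integral_contrapositive_currified; auto; apply pow_nonzero; lra|].
    destruct m as [|k]; [lia|]. simpl Init.Nat.pred.
    assert (x <> 0) by lra. assert (x ^ k <> 0) by (apply pow_nonzero; lra).
    replace (x ^ S (S k)) with (x * x * x ^ k) by (simpl; ring).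
    replace (x ^ S k) with (x * x ^ k) by (simpl; ring).
    field. auto.
  - intros x Hx. rewrite Rmin_left, Rmax_right in Hx by lra.
    apply ex_derive_continuous_R. auto_derive.
    apply Rmult_integral_contrapositive_currified; [lra| apply pow_nonzero; lra].
Qed.

Lemma RInt_le_split_power_bounds (f : R -> R) m j A B mu b :
  (1 <= j)%nat -> 0 < mu <= b -> 0 <= B -> (forall c d, ex_RInt f c d) ->
  (forall p, 0 <= p <= mu -> f p <= A * p ^ m) ->
  (forall p, mu <= p -> f p <= B * / p ^ S j) ->
  RInt f 0 b <= A * (mu ^ S m / INR (S m)) + B * (/ mu ^ j / INR j).
Proof.
  intros Hj Hmu HB Hex Hsmall Hlarge.
  assert (Hexinv : ex_RInt (fun p => / p ^ S j) mu b).
  { apply ex_RInt_continuous_R. intros z Hz. rewrite Rmin_left in Hz by lra.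
    apply ex_derive_continuous_R. auto_derive.
    apply Rmult_integral_contrapositive_currified; [lra| apply pow_nonzero; lra]. }
  rewrite <- (RInt_scal_pow A m mu), <- (RInt_Chasles f 0 mu b) by auto.
  apply Rplus_le_compat.
  - apply RInt_le; [lra| apply Hex| |].
    + apply (ex_RInt_scal (V := R_NormedModule) (fun p => p ^ m)).
      exists (mu ^ S m / INR (S m) - 0 ^ S m / INR (S m)). apply is_RInt_pow.
    + intros p Hp; apply Hsmall; lra.
  - apply Rle_trans with (RInt (fun p => B * / p ^ S j) mu b).
    + apply RInt_le; auto; [lra| apply (ex_RInt_scal (V := R_NormedModule)); auto|].
      intros p Hp; apply Hlarge; lra.
    + rewrite (RInt_scal (V := R_CompleteNormedModule)) by auto.
      rewrite RInt_inv_pow by (auto; lra).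
      unfold scal; simpl; unfold mult; simpl.
      apply Rmult_le_compat_l; auto. unfold Rdiv. apply Rmult_le_compat_r.
      * left. apply Rinv_0_lt_compat, lt_0_INR. lia.
      * assert (0 < / b ^ j) by (apply Rinv_0_lt_compat, pow_lt; lra). lra.
Qed.

Lemma weight_le p : 0 <= p -> weight p <= p.
Proof.
  intros Hp. unfold weight.
  assert (1 <= (1 + p ^ 2) ^ 2) by (rewrite <- (pow1 2); apply pow_incr; nra).
  apply Rmult_le_reg_r with ((1 + p ^ 2) ^ 2); [lra|].
  unfold Rdiv. rewrite Rmult_assoc, Rinv_l by lra. nra.
Qed.

Lemma kern0_eq n s p : kern n 0 s p = weight p * p ^ (2 * n) / (1 + s * p ^ (2 * n)) ^ 2.
Proof. unfold kern. now rewrite pow_1. Qed.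

Lemma kern0_le_pow n s p : 0 <= s -> 0 <= p -> kern n 0 s p <= p ^ (2 * n + 1).
Proof.
  intros Hs Hp. rewrite kern0_eq, pow_add, pow_1.
  pose proof (pow_even_ge0 n p) as Hx. set (x := p ^ (2 * n)) in *.
  assert (1 <= (1 + s * x) ^ 2) by (rewrite <- (pow1 2); apply pow_incr; nra).
  pose proof (weight_le p Hp). destruct (weight_bound p Hp) as [Hw _].
  apply Rmult_le_reg_r with ((1 + s * x) ^ 2); [lra|].
  unfold Rdiv. rewrite Rmult_assoc, Rinv_l by lra.
  assert (x * weight p <= x * p) by (apply Rmult_le_compat_l; lra).
  assert (0 <= x * p) by nra. nra.
Qed.

Lemma kern0_le_inv_pow n s p : (1 <= n)%nat -> 0 < s -> 0 < p ->
  kern n 0 s p <= (/ s) ^ 2 * / p ^ S (2 * n - 2).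
Proof.
  intros Hn Hs Hp. rewrite kern0_eq.
  assert (Hx : p ^ (2 * n) = p ^ S (2 * n - 2) * p)
    by (rewrite Rmult_comm, tech_pow_Rmult; f_equal; lia).
  assert (Hy : 0 < p ^ S (2 * n - 2)) by (apply pow_lt; lra).
  rewrite Hx. set (y := p ^ S (2 * n - 2)) in *.
  pose proof (weight_le p ltac:(lra)). destruct (weight_bound p ltac:(lra)) as [Hw _].
  assert (Hsx : 0 < s * (y * p)) by (apply Rmult_lt_0_compat; [lra| apply Rmult_lt_0_compat; lra]).
  apply Rle_trans with (weight p * (y * p) / (s * (y * p)) ^ 2).
  - unfold Rdiv. apply Rmult_le_compat_l; [nra|].
    apply Rinv_le_contravar; [apply pow_lt; lra| apply pow_incr; lra].
  - replace ((/ s) ^ 2 * / y) with (p * (y * p) / (s * (y * p)) ^ 2) by (field; lra).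
    unfold Rdiv. apply Rmult_le_compat_r; [left; apply Rinv_0_lt_compat, pow_lt; lra| nra].
Qed.

Definition mom_integrand n s p := -2 * s * kern n 1 s p + (1 + / INR n) * kern n 0 s p.
Definition ibp_integrand n s p := 4 * p ^ 2 / (1 + p ^ 2) * kern n 0 s p.

Lemma ibp_integrand_continuous n s p : 0 <= s -> continuous (ibp_integrand n s) p.
Proof.
  intros Hs. apply (continuous_mult (fun p => 4 * p ^ 2 / (1 + p ^ 2)) (kern n 0 s)).
  - apply ex_derive_continuous_R. auto_derive. nra.
  - apply kern_continuous. lra.
Qed.

Lemma p_kern0_derive n s p : (1 <= n)%nat -> 0 <= s ->
  is_derive (fun p => p * kern n 0 s p) p (2 * INR n * mom_integrand n s p - ibp_integrand n s p).
Proof.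
  intros Hn Hs.
  apply (is_derive_ext (fun p => p * (p / (1 + p ^ 2) ^ 2 * p ^ (2 * n) / (1 + s * p ^ (2 * n)) ^ 2))).
  { intros q. now rewrite kern0_eq. }
  unfold mom_integrand, ibp_integrand. rewrite !kern0_eq. unfold kern, weight.
  pose proof (pow_even_ge0 n p). pose proof (pow2_ge_0 p).
  assert (0 < 1 + s * p ^ (2 * n)) by nra.
  auto_derive.
  - change (n + (n + 0))%nat with (2 * n)%nat. repeat split; try apply pow_nonzero; nra.
  - change (n + (n + 0))%nat with (2 * n)%nat.
    rewrite mult_INR. simpl INR at 1.
    destruct (2 * n)%nat as [|k] eqn:Hk; [lia|]. simpl Init.Nat.pred.
    simpl pow in *. replace (INR 2) with 2 by (simpl; ring).
    assert (INR n <> 0) by (apply not_0_INR; lia).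
    set (y := p ^ k) in *. field. repeat split; [nra| lra| auto].
Qed.

Lemma ibp_integrand_le_kern0 n s p : 0 <= s -> 0 <= p -> 0 <= ibp_integrand n s p <= 4 * p ^ 2 * kern n 0 s p.
Proof.
  intros Hs Hp. unfold ibp_integrand.
  assert (Hk : 0 <= kern n 0 s p).
  { rewrite kern0_eq. pose proof (pow_even_ge0 n p). destruct (weight_bound p Hp).
    apply Rdiv_le_0_compat; [nra| apply pow_lt; nra]. }
  assert (0 <= 4 * p ^ 2 / (1 + p ^ 2) <= 4 * p ^ 2).
  { split; [apply Rdiv_le_0_compat; nra|].
    apply Rmult_le_reg_r with (1 + p ^ 2); [nra|].
    unfold Rdiv. rewrite Rmult_assoc, Rinv_l by nra. nra. }
  split; [nra|]. apply Rmult_le_compat_r; lra.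
Qed.

Lemma ibp_integrand_le_pow n s p : 0 <= s -> 0 <= p -> ibp_integrand n s p <= 4 * p ^ (2 * n + 3).
Proof.
  intros Hs Hp. destruct (ibp_integrand_le_kern0 n s p Hs Hp) as [_ H].
  pose proof (kern0_le_pow n s p Hs Hp).
  replace (p ^ (2 * n + 3)) with (p ^ 2 * p ^ (2 * n + 1))
    by (rewrite <- pow_add; f_equal; lia).
  assert (0 <= p ^ 2) by apply pow2_ge_0. nra.
Qed.

Lemma ibp_integrand_le_inv_pow n s p : (2 <= n)%nat -> 0 < s -> 0 < p ->
  ibp_integrand n s p <= 4 * (/ s) ^ 2 * / p ^ S (2 * n - 4).
Proof.
  intros Hn Hs Hp. destruct (ibp_integrand_le_kern0 n s p ltac:(lra) ltac:(lra)) as [_ H].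
  pose proof (kern0_le_inv_pow n s p ltac:(lia) Hs Hp).
  replace (p ^ S (2 * n - 2)) with (p ^ 2 * p ^ S (2 * n - 4)) in H0
    by (rewrite <- pow_add; f_equal; lia).
  assert (0 < p ^ 2) by (apply pow_lt; lra).
  assert (0 < p ^ S (2 * n - 4)) by (apply pow_lt; lra).
  rewrite Rinv_mult in H0.
  replace (4 * (/ s) ^ 2 * / p ^ S (2 * n - 4))
    with (4 * p ^ 2 * ((/ s) ^ 2 * (/ p ^ 2 * / p ^ S (2 * n - 4)))) by (field; lra).
  eapply Rle_trans; [exact H|]. apply Rmult_le_compat_l; nra.
Qed.

Lemma pow_sq_mul_inv_pow n j mu : (j <= 4 * n)%nat -> 0 < mu ->
  (mu ^ (2 * n)) ^ 2 * / mu ^ j = mu ^ (4 * n - j).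
Proof.
  intros Hj Hmu. rewrite <- pow_mult.
  replace (2 * n * 2)%nat with (4 * n - j + j)%nat by lia.
  rewrite pow_add. field. apply pow_nonzero. lra.
Qed.

Lemma p_kern0_le n s b : (2 <= n)%nat -> 0 < s -> 1 <= b -> b * kern n 0 s b <= (/ s) ^ 2 / b.
Proof.
  intros Hn Hs Hb. pose proof (kern0_le_inv_pow n s b ltac:(lia) Hs ltac:(lra)) as H.
  replace (b ^ S (2 * n - 2)) with (b * b ^ (2 * n - 2)) in H by reflexivity.
  assert (b <= b ^ (2 * n - 2)) by (rewrite <- (pow_1 b) at 1; apply Rle_pow; lia || lra).
  set (y := b ^ (2 * n - 2)) in *. set (A := (/ s) ^ 2) in *.
  assert (0 <= A) by apply pow2_ge_0. clearbody y A.
  apply Rle_trans with (b * (A * / (b * y))); [apply Rmult_le_compat_l; lra|].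
  replace (b * (A * / (b * y))) with (A * / y) by (field; split; lra).
  unfold Rdiv. apply Rmult_le_compat_l; [lra|]. apply Rinv_le_contravar; lra.
Qed.

Section Scaling.
Variables (n : nat) (mu : R).
Hypothesis Hn : (3 <= n)%nat.
Hypothesis Hmu : 0 < mu <= 1.

Let s := / mu ^ (2 * n).

Let Hs : 0 < s.
Proof. apply Rinv_0_lt_compat, pow_lt. lra. Qed.

Let inv_s : / s = mu ^ (2 * n).
Proof. unfold s. rewrite Rinv_inv. reflexivity. Qed.

Lemma Ik0_scaled_lower : / 16 * (mu ^ S (2 * n + 1) / INR (S (2 * n + 1))) <= Ik n 0 s.
Proof.
  replace (/ 16) with (/ (4 * (1 + 1) ^ 2)) by (simpl; field).
  apply Ik0_ge; auto; [lra|]. unfold s. rewrite Rinv_l; [lra| apply pow_nonzero; lra].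
Qed.

Lemma Ik0_scaled_upper :
  Ik n 0 s <= mu ^ S (2 * n + 1) * (/ INR (S (2 * n + 1)) + / INR (2 * n - 2)).
Proof.
  apply (is_RInt_infty0_le _ _ _ 0 mu (kern_is_RInt_infty0 n 0 s Hs)); try lra.
  intros b Hb. rewrite Rdiv_0_l, Rplus_0_r.
  eapply Rle_trans.
  - apply (RInt_le_split_power_bounds _ (2 * n + 1) (2 * n - 2) 1 ((/ s) ^ 2) mu b);
      [lia| lra| apply pow2_ge_0| | |].
    + intros c d. apply (ex_RInt_of_is_RInt_infty0 _ _ _ _ (kern_is_RInt_infty0 n 0 s Hs)).
    + intros p Hp. rewrite Rmult_1_l. apply kern0_le_pow; lra.
    + intros p Hp. apply kern0_le_inv_pow; lia || lra.
  - rewrite inv_s, Rmult_1_l. unfold Rdiv.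
    rewrite <- Rmult_assoc, pow_sq_mul_inv_pow by (lia || lra).
    replace (4 * n - (2 * n - 2))%nat with (S (2 * n + 1)) by lia. lra.
Qed.

Lemma mom_integrand_is_RInt_infty0 :
  is_RInt_infty0 (mom_integrand n s) (-2 * s * Ik n 1 s + (1 + / INR n) * Ik n 0 s).
Proof. apply is_RInt_infty0_plus; apply is_RInt_infty0_scal, kern_is_RInt_infty0, Hs. Qed.

Lemma RInt_mom_integrand b : 0 <= b ->
  RInt (mom_integrand n s) 0 b = (b * kern n 0 s b + RInt (ibp_integrand n s) 0 b) / (2 * INR n).
Proof.
  intros Hb. assert (HnI : 0 < INR n) by (apply lt_0_INR; lia).
  assert (Hexk : ex_RInt (mom_integrand n s) 0 b)
    by apply (ex_RInt_of_is_RInt_infty0 _ _ _ _ mom_integrand_is_RInt_infty0).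
  assert (Hexm : ex_RInt (ibp_integrand n s) 0 b).
  { apply ex_RInt_continuous_R. intros z _. apply ibp_integrand_continuous. lra. }
  assert (E : RInt (fun p => 2 * INR n * mom_integrand n s p - ibp_integrand n s p) 0 b
              = b * kern n 0 s b - 0 * kern n 0 s 0).
  { apply is_RInt_unique, (is_RInt_derive (fun p => p * kern n 0 s p)).
    - intros x _. apply p_kern0_derive; lia || lra.
    - intros x _. apply (continuous_minus (V := R_NormedModule)).
      + apply (continuous_scal_r (K := R_AbsRing) (V := R_NormedModule)).
        apply (continuous_plus (V := R_NormedModule));
          apply (continuous_scal_r (K := R_AbsRing) (V := R_NormedModule)), kern_continuous; lra.
      + apply ibp_integrand_continuous. lra. }
  rewrite (RInt_minus (V := R_CompleteNormedModule)) in E;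
    [| apply (ex_RInt_scal (V := R_NormedModule)); auto| auto].
  rewrite (RInt_scal (V := R_CompleteNormedModule)) in E by auto.
  unfold minus, plus, opp, scal in E; simpl in E; unfold mult in E; simpl in E.
  apply Rmult_eq_reg_l with (2 * INR n); [|lra].
  field_simplify; [|lra]. lra.
Qed.

Lemma RInt_ibp_integrand_scaled_le b : mu <= b ->
  RInt (ibp_integrand n s) 0 b <= 4 * mu ^ S (2 * n + 3) * (/ INR (S (2 * n + 3)) + / INR (2 * n - 4)).
Proof.
  intros Hb. eapply Rle_trans.
  - apply (RInt_le_split_power_bounds _ (2 * n + 3) (2 * n - 4) 4 (4 * (/ s) ^ 2) mu b);
      [lia| lra| apply Rmult_le_pos; [lra| apply pow2_ge_0]| | |].
    + intros c d. apply ex_RInt_continuous_R. intros z _. apply ibp_integrand_continuous. lra.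
    + intros p Hp. apply ibp_integrand_le_pow; lra.
    + intros p Hp. apply ibp_integrand_le_inv_pow; lia || lra.
  - rewrite inv_s. unfold Rdiv.
    replace (4 * (mu ^ (2 * n)) ^ 2 * (/ mu ^ (2 * n - 4) * / INR (2 * n - 4)))
      with (4 * ((mu ^ (2 * n)) ^ 2 * / mu ^ (2 * n - 4)) * / INR (2 * n - 4)) by ring.
    rewrite pow_sq_mul_inv_pow by (lia || lra).
    replace (4 * n - (2 * n - 4))%nat with (S (2 * n + 3)) by lia. lra.
Qed.

Lemma mom_integrand_scaled_bound :
  0 <= -2 * s * Ik n 1 s + (1 + / INR n) * Ik n 0 s <=
  4 * mu ^ S (2 * n + 3) * (/ INR (S (2 * n + 3)) + / INR (2 * n - 4)) / (2 * INR n).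
Proof.
  assert (HnI : 0 < INR n) by (apply lt_0_INR; lia).
  assert (Hibp : forall p, 0 <= p -> 0 <= ibp_integrand n s p)
    by (intros p Hp; apply ibp_integrand_le_kern0; lra).
  assert (Hk0 : forall b, 0 <= b -> 0 <= kern n 0 s b) by (intros b Hb; apply kern_bound; lra).
  split.
  - apply (is_RInt_infty0_ge _ _ 0 0 mom_integrand_is_RInt_infty0).
    intros b Hb. rewrite RInt_mom_integrand by lra.
    apply Rdiv_le_0_compat; [|lra]. apply Rplus_le_le_0_compat; [pose proof (Hk0 b Hb); nra|].
    apply RInt_ge_0; [lra| |intros x Hx; apply Hibp; lra].
    apply ex_RInt_continuous_R. intros z _. apply ibp_integrand_continuous. lra.
  - apply (is_RInt_infty0_le _ _ _ ((mu ^ (2 * n)) ^ 2 / (2 * INR n)) 1 mom_integrand_is_RInt_infty0); try lra.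
    { apply Rdiv_le_0_compat; [apply pow2_ge_0| lra]. }
    intros b Hb. rewrite RInt_mom_integrand by lra.
    pose proof (p_kern0_le n s b ltac:(lia) Hs Hb) as Hg. rewrite inv_s in Hg.
    pose proof (RInt_ibp_integrand_scaled_le b ltac:(lra)) as Hm.
    unfold Rdiv. rewrite Rmult_plus_distr_r.
    assert (0 < / (2 * INR n)) by (apply Rinv_0_lt_compat; lra).
    unfold Rdiv in Hg.
    replace ((mu ^ (2 * n)) ^ 2 * / (2 * INR n) * / b) with ((mu ^ (2 * n)) ^ 2 * / b * / (2 * INR n)) by ring.
    apply Rmult_le_compat_r with (r := / (2 * INR n)) in Hg, Hm; lra.
Qed.

End Scaling.

(** * Conservation laws and blow-up *)

Lemma RMG_eq_solved n lam u v u1 v1 u2 v2 : 0 < u ^ 2 + v ^ 2 -> RMG_eq n lam u v u1 v1 u2 v2 ->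
  let s := u ^ 2 + v ^ 2 in
  let K := - (4 * dlnFc n s + 4 * s * d2lnFc n s) / (2 * Fc n s) in
  u2 = lam * K * (- v1) - dFc n s * (u * u1 ^ 2 + 2 * v * u1 * v1 - u * v1 ^ 2) / Fc n s /\
  v2 = lam * K * u1 - dFc n s * (v * v1 ^ 2 + 2 * u * u1 * v1 - v * u1 ^ 2) / Fc n s.
Proof.
  intros Hs [Hu Hv] s K. pose proof (Fc_pos n s Hs).
  unfold cov_acc_u, cov_acc_v in Hu, Hv.
  rewrite d_u_conf, d_v_conf, conf_eq, gauss_K_eq in Hu, Hv by auto.
  fold s K in Hu, Hv. split.
  - rewrite <- Hu. field. lra.
  - rewrite <- Hv. field. lra.
Qed.

Lemma RMG_energy_identity n lam u v u1 v1 u2 v2 : 0 < u ^ 2 + v ^ 2 -> RMG_eq n lam u v u1 v1 u2 v2 ->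
  dFc n (u ^ 2 + v ^ 2) * (2 * u * u1 + 2 * v * v1) * (u1 ^ 2 + v1 ^ 2)
  + Fc n (u ^ 2 + v ^ 2) * (2 * u1 * u2 + 2 * v1 * v2) = 0.
Proof.
  intros Hs HR. pose proof (Fc_pos n _ Hs).
  destruct (RMG_eq_solved n lam u v u1 v1 u2 v2 Hs HR) as [-> ->]. field. lra.
Qed.

Lemma RMG_momentum_identity n lam u v u1 v1 u2 v2 : 0 < u ^ 2 + v ^ 2 -> RMG_eq n lam u v u1 v1 u2 v2 ->
  dFc n (u ^ 2 + v ^ 2) * (2 * u * u1 + 2 * v * v1) * (u * v1 - v * u1)
  + Fc n (u ^ 2 + v ^ 2) * (u * v2 - v * u2)
  + lam * ((2 * u * u1 + 2 * v * v1) * dlnFc n (u ^ 2 + v ^ 2)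
           + (u ^ 2 + v ^ 2) * (d2lnFc n (u ^ 2 + v ^ 2) * (2 * u * u1 + 2 * v * v1))) = 0.
Proof.
  intros Hs HR. pose proof (Fc_pos n _ Hs).
  destruct (RMG_eq_solved n lam u v u1 v1 u2 v2 Hs HR) as [-> ->]. field. lra.
Qed.

Lemma const_of_derive_zero (f : R -> R) : (forall t, derivable_pt_lim f t 0) -> forall t, f t = f 0.
Proof.
  intros H t. destruct (Rtotal_order t 0) as [Hl|[He|Hg]].
  - destruct (MVT_cor2 f (fun _ => 0) t 0) as [c [Hc _]]; [lra| intros; apply H|]. lra.
  - subst; auto.
  - destruct (MVT_cor2 f (fun _ => 0) 0 t) as [c [Hc _]]; [lra| intros; apply H|]. lra.
Qed.

(* The magnetic term [lam^2 D^2 / F^4] is at most half of [E / (a F)], and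
   [E / (2 a F) * a^2 m >= 1] by the upper bound on [F]. *)
Lemma radial_speed_ineq a m F D E lam P cL CU CD :
  0 < a -> 0 < m <= 1 -> 0 < P -> 0 < cL -> 0 < CU -> 0 <= CD ->
  P * cL * (a * m) <= F <= P * CU * (a * m) -> 0 <= D <= P * CD * (a * (m * m)) ->
  2 * P * CU <= E -> 2 * lam ^ 2 * CD ^ 2 / (P * cL ^ 3) <= E ->
  1 <= (E / (a * F) - lam ^ 2 * D ^ 2 / F ^ 4) * (a ^ 2 * m).
Proof.
  intros Ha Hm HP HcL HCU HCD [HF1 HF2] [HD1 HD2] HE1 HE2.
  assert (Ham : 0 < a * m) by nra.
  assert (HPcL : 0 < P * cL ^ 3) by (apply Rmult_lt_0_compat; [|apply pow_lt]; lra).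
  assert (HF : 0 < F) by (assert (0 < P * cL * (a * m)) by (repeat apply Rmult_lt_0_compat; lra); lra).
  assert (HE : 0 < E) by nra.
  assert (HD : D ^ 2 <= (P * CD) ^ 2 * (a ^ 2 * m ^ 3)).
  { assert (D ^ 2 <= (P * CD * (a * (m * m))) ^ 2) by (apply pow_incr; lra).
    assert (0 <= (P * CD) ^ 2 * (a ^ 2 * m ^ 3))
      by (apply Rmult_le_pos; [apply pow2_ge_0| apply Rmult_le_pos; apply pow_le; lra]).
    replace ((P * CD * (a * (m * m))) ^ 2) with ((P * CD) ^ 2 * (a ^ 2 * m ^ 3) * m) in H by ring.
    nra. }
  assert (HF3 : (P * cL * (a * m)) ^ 3 <= F ^ 3) by (apply pow_incr; nra).
  assert (Hlam : 2 * lam ^ 2 * CD ^ 2 <= E * (P * cL ^ 3)).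
  { apply Rmult_le_compat_r with (r := P * cL ^ 3) in HE2; [|lra].
    unfold Rdiv in HE2. rewrite Rmult_assoc, Rinv_l, Rmult_1_r in HE2 by lra. lra. }
  assert (Hmag : 2 * a * (lam ^ 2 * D ^ 2) <= E * F ^ 3).
  { assert (0 <= P ^ 2 * a ^ 3 * m ^ 3) by (apply Rmult_le_pos; [apply Rmult_le_pos|]; apply pow_le; lra).
    apply Rle_trans with ((2 * lam ^ 2 * CD ^ 2) * (P ^ 2 * a ^ 3 * m ^ 3)).
    - replace ((2 * lam ^ 2 * CD ^ 2) * (P ^ 2 * a ^ 3 * m ^ 3))
        with (2 * a * (lam ^ 2 * ((P * CD) ^ 2 * (a ^ 2 * m ^ 3)))) by ring.
      apply Rmult_le_compat_l; [lra|]. apply Rmult_le_compat_l; [apply pow2_ge_0| exact HD].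
    - apply Rle_trans with ((E * (P * cL ^ 3)) * (P ^ 2 * a ^ 3 * m ^ 3)); [apply Rmult_le_compat_r; lra|].
      replace ((E * (P * cL ^ 3)) * (P ^ 2 * a ^ 3 * m ^ 3)) with (E * (P * cL * (a * m)) ^ 3) by ring.
      apply Rmult_le_compat_l; lra. }
  assert (Hhalf : lam ^ 2 * D ^ 2 / F ^ 4 <= E / (2 * a * F)).
  { apply Rmult_le_reg_r with (2 * a * F * F ^ 4); [repeat apply Rmult_lt_0_compat; try apply pow_lt; lra|].
    replace (lam ^ 2 * D ^ 2 / F ^ 4 * (2 * a * F * F ^ 4)) with (2 * a * (lam ^ 2 * D ^ 2) * F) by (field; lra).
    replace (E / (2 * a * F) * (2 * a * F * F ^ 4)) with (E * F ^ 3 * F) by (field; lra).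
    apply Rmult_le_compat_r; lra. }
  assert (Hkin : 2 * F <= E * (a * m)).
  { apply Rle_trans with ((2 * P * CU) * (a * m)); [lra| apply Rmult_le_compat_r; lra]. }
  apply Rle_trans with (E / (2 * a * F) * (a ^ 2 * m)).
  - replace (E / (2 * a * F) * (a ^ 2 * m)) with (E * (a * m) / (2 * F)) by (field; lra).
    apply Rmult_le_reg_r with (2 * F); [lra|].
    replace (E * (a * m) / (2 * F) * (2 * F)) with (E * (a * m)) by (field; lra). lra.
  - apply Rmult_le_compat_r; [apply Rmult_le_pos; [apply pow_le|]; lra|].
    replace (E / (a * F)) with (2 * (E / (2 * a * F))) by (field; lra). lra.
Qed.

Lemma continuity_first_zero (q : R -> R) t1 : continuity q -> 0 < q 0 -> 0 < t1 -> q t1 <= 0 ->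
  exists tau, 0 < tau <= t1 /\ q tau = 0 /\ forall r, 0 <= r < tau -> 0 < q r.
Proof.
  intros Hq Hq0 Ht1 Hqt1.
  set (S := fun tau => 0 <= tau <= t1 /\ forall r, 0 <= r <= tau -> 0 < q r).
  assert (HS0 : S 0) by (split; [lra|]; intros r Hr; replace r with 0 by lra; auto).
  destruct (completeness S) as [tau [Hub Hlub]]; [exists t1; intros x [Hx _]; lra| exists 0; auto|].
  assert (Htau : 0 <= tau <= t1) by (split; [apply Hub, HS0| apply Hlub; intros x [Hx _]; lra]).
  assert (Hbefore : forall r, 0 <= r < tau -> 0 < q r).
  { intros r Hr. apply NNPP; intro Hn. assert (tau <= r); [|lra].
    apply Hlub. intros x [Hx Hx2]. apply Rnot_lt_le; intro Hxr. apply Hn, Hx2. lra. }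
  assert (Hgt : ~ 0 < q tau).
  { intros Hgt. assert (Htl : tau < t1) by (destruct (Req_dec tau t1) as [->|E]; lra).
    destruct (Hq tau (q tau) Hgt) as [d [Hd Hcd]].
    set (tau' := Rmin (tau + d / 2) t1).
    assert (S tau').
    { split; [unfold tau'; split; [apply Rmin_glb; lra| apply Rmin_r]|].
      intros r Hr. destruct (Rlt_le_dec r tau) as [Hrt|Hrt]; [apply Hbefore; lra|].
      destruct (Req_dec r tau) as [->|Er]; auto.
      assert (Hdr : R_dist r tau < d).
      { unfold R_dist. pose proof (Rmin_l (tau + d / 2) t1). unfold tau' in Hr. rewrite Rabs_right; lra. }
      specialize (Hcd r (conj (conj I (fun h => Er (eq_sym h))) Hdr)). simpl in Hcd. unfold R_dist in Hcd.
      apply Rabs_def2 in Hcd. lra. }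
    pose proof (Hub _ H). assert (tau < tau') by (apply Rmin_glb_lt; lra). lra. }
  assert (Hpos : 0 < tau) by (destruct (Req_dec tau 0) as [E|E]; [rewrite E in Hgt|]; lra).
  exists tau. split; [lra| split; auto].
  destruct (Rtotal_order (q tau) 0) as [Hlt|[Heq|Hgt']]; [exfalso| auto| lra].
  destruct (IVT (fun t => - q t) 0 tau) as [z [Hz1 Hz2]]; [apply continuity_opp; auto| lra| lra| lra|].
  destruct (Req_dec z tau) as [->|Ez]; [lra|].
  assert (0 < q z) by (apply Hbefore; lra). lra.
Qed.

(* While [q > 0], [s] increases and stays above [s0], where [q] cannot vanish; so [q] has no first zero. *)
Lemma pos_forward (q s : R -> R) s0 : continuity q -> (forall t, derivable_pt_lim s t (2 * q t)) ->
  0 < q 0 -> s0 <= s 0 -> (forall t, s0 <= s t -> q t <> 0) -> forall t, 0 <= t -> 0 < q t.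
Proof.
  intros Hq Hs Hq0 Hs0 Hnz t Ht. apply Rnot_le_lt; intro Hle.
  assert (Htp : 0 < t) by (destruct (Req_dec t 0) as [->|]; lra).
  destruct (continuity_first_zero q t Hq Hq0 Htp Hle) as [tau [Htau [Hz Hbefore]]].
  apply (Hnz tau); auto.
  destruct (MVT_cor2 s (fun t => 2 * q t) 0 tau) as [c [Hc1 Hc2]]; [lra| intros c _; apply Hs|].
  assert (0 < q c) by (apply Hbefore; lra). nra.
Qed.

Lemma exp_pow a k : exp a ^ k = exp (INR k * a).
Proof.
  induction k. simpl. rewrite Rmult_0_l, exp_0. auto.
  rewrite S_INR. simpl. rewrite IHk, <- exp_plus. f_equal. ring.
Qed.

Definition mu_of (n : nat) (s : R) := exp (- ln s / INR (2 * n)).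

Lemma mu_of_pow n s : (1 <= n)%nat -> 0 < s -> mu_of n s ^ (2 * n) = / s.
Proof.
  intros Hn Hs. unfold mu_of. rewrite exp_pow.
  replace (INR (2 * n) * (- ln s / INR (2 * n))) with (- ln s).
  rewrite <- ln_Rinv by auto. apply exp_ln. apply Rinv_0_lt_compat; auto.
  field. apply not_0_INR; lia.
Qed.

Lemma mu_of_le1 n s : (1 <= n)%nat -> 1 <= s -> 0 < mu_of n s <= 1.
Proof.
  intros Hn Hs. unfold mu_of. split; [apply exp_pos|].
  assert (0 <= ln s).
  { destruct (Req_dec s 1) as [E|E]; [subst; rewrite ln_1; lra|].
    rewrite <- ln_1. left. apply ln_increasing; lra. }
  assert (0 < INR (2 * n)) by (apply lt_0_INR; lia).
  assert (- ln s / INR (2 * n) <= 0).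
  { unfold Rdiv. assert (0 < / INR (2*n)) by (apply Rinv_0_lt_compat; lra). nra. }
  destruct (Req_dec (- ln s / INR (2 * n)) 0) as [E|E].
  - rewrite E, exp_0; lra.
  - left. rewrite <- exp_0. apply exp_increasing. lra.
Qed.

Lemma mu_of_derive n (s : R -> R) t ds : (1 <= n)%nat -> 0 < s t -> derivable_pt_lim s t ds ->
  derivable_pt_lim (fun t => mu_of n (s t)) t (mu_of n (s t) * (- (ds / s t) / INR (2 * n))).
Proof.
  intros Hn Hs Hd. apply is_derive_Reals in Hd. apply is_derive_Reals.
  unfold mu_of. auto_derive.
  - change (n + (n + 0))%nat with (2 * n)%nat. repeat split; try lra. exists ds; auto. 
  - change (n + (n + 0))%nat with (2 * n)%nat.
    replace (Derive (fun x => s x) t) with ds by (symmetry; apply is_derive_unique; auto).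
    unfold Rdiv. field. split; [apply not_0_INR; lia| lra].
Qed.


Definition c_low n := / 16 * / INR (S (2 * n + 1)).
Definition c_up n := / INR (S (2 * n + 1)) + / INR (2 * n - 2).
Definition c_mom n := 4 * (/ INR (S (2 * n + 3)) + / INR (2 * n - 4)) / (2 * INR n).
Definition energy_threshold n lam :=
  2 * (32 * PI) * c_up n + 2 * lam ^ 2 * c_mom n ^ 2 / (32 * PI * c_low n ^ 3).

Lemma scaling_constants_pos n : (3 <= n)%nat -> 0 < c_low n /\ 0 < c_up n /\ 0 <= c_mom n.
Proof.
  intros Hn.
  assert (0 < / INR (S (2 * n + 1))) by (apply Rinv_0_lt_compat, lt_0_INR; lia).
  assert (0 < / INR (S (2 * n + 3))) by (apply Rinv_0_lt_compat, lt_0_INR; lia).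
  assert (0 < / INR (2 * n - 2)) by (apply Rinv_0_lt_compat, lt_0_INR; lia).
  assert (0 < / INR (2 * n - 4)) by (apply Rinv_0_lt_compat, lt_0_INR; lia).
  assert (0 < INR n) by (apply lt_0_INR; lia).
  unfold c_low, c_up, c_mom. repeat split; try lra.
  left. apply Rdiv_lt_0_compat; lra.
Qed.

Lemma energy_threshold_ge n lam : (3 <= n)%nat ->
  2 * (32 * PI) * c_up n <= energy_threshold n lam /\
  2 * lam ^ 2 * c_mom n ^ 2 / (32 * PI * c_low n ^ 3) <= energy_threshold n lam.
Proof.
  intros Hn. destruct (scaling_constants_pos n Hn) as [Hl [Hu _]]. pose proof PI_RGT_0.
  assert (0 <= 2 * lam ^ 2 * c_mom n ^ 2 / (32 * PI * c_low n ^ 3)).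
  { apply Rdiv_le_0_compat; [apply Rmult_le_pos; [apply Rmult_le_pos; [lra| apply pow2_ge_0]| apply pow2_ge_0]|].
    apply Rmult_lt_0_compat; [lra| apply pow_lt; lra]. }
  unfold energy_threshold. split; nra.
Qed.

Definition mom_density n s := s * dFc n s + (1 + / INR n) * Fc n s.

Lemma Fc_mom_density_scaled_bounds n mu : (3 <= n)%nat -> 0 < mu <= 1 ->
  32 * PI * c_low n * (mu ^ (2 * n) * mu ^ 2) <= Fc n (/ mu ^ (2 * n))
    <= 32 * PI * c_up n * (mu ^ (2 * n) * mu ^ 2) /\
  0 <= mom_density n (/ mu ^ (2 * n)) <= 32 * PI * c_mom n * (mu ^ (2 * n) * (mu ^ 2 * mu ^ 2)).
Proof.
  intros Hn Hmu. assert (HP : 0 < 32 * PI) by (pose proof PI_RGT_0; lra).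
  pose proof (Ik0_scaled_lower n mu Hmu) as Hlo.
  pose proof (Ik0_scaled_upper n mu Hn Hmu) as Hup.
  pose proof (mom_integrand_scaled_bound n mu Hn Hmu) as Hkf.
  replace (mu ^ S (2 * n + 1)) with (mu ^ (2 * n) * mu ^ 2) in Hlo, Hup by (rewrite <- pow_add; f_equal; lia).
  replace (mu ^ S (2 * n + 3)) with (mu ^ (2 * n) * (mu ^ 2 * mu ^ 2)) in Hkf
    by (rewrite <- !pow_add; f_equal; lia).
  set (s := / mu ^ (2 * n)) in *. set (a := mu ^ (2 * n)) in *. set (m := mu ^ 2) in *.
  unfold mom_density, dFc, Fc, c_low, c_up, c_mom. split; [split|split].
  - replace (32 * PI * (/ 16 * / INR (S (2 * n + 1))) * (a * m))
      with (32 * PI * (/ 16 * (a * m / INR (S (2 * n + 1))))) by (unfold Rdiv; ring).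
    apply Rmult_le_compat_l; lra.
  - replace (32 * PI * (/ INR (S (2 * n + 1)) + / INR (2 * n - 2)) * (a * m))
      with (32 * PI * (a * m * (/ INR (S (2 * n + 1)) + / INR (2 * n - 2)))) by ring.
    apply Rmult_le_compat_l; lra.
  - replace (s * (-64 * PI * Ik n 1 s) + (1 + / INR n) * (32 * PI * Ik n 0 s))
      with (32 * PI * (-2 * s * Ik n 1 s + (1 + / INR n) * Ik n 0 s)) by ring.
    apply Rmult_le_pos; lra.
  - replace (s * (-64 * PI * Ik n 1 s) + (1 + / INR n) * (32 * PI * Ik n 0 s))
      with (32 * PI * (-2 * s * Ik n 1 s + (1 + / INR n) * Ik n 0 s)) by ring.
    replace (32 * PI * (4 * (/ INR (S (2 * n + 3)) + / INR (2 * n - 4)) / (2 * INR n)) * (a * (m * m)))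
      with (32 * PI * (4 * (a * (m * m)) * (/ INR (S (2 * n + 3)) + / INR (2 * n - 4)) / (2 * INR n)))
      by (unfold Rdiv; ring).
    apply Rmult_le_compat_l; lra.
Qed.

Section Flow.
Variables (n : nat) (lam : R).
Hypothesis Hn : (5 <= n)%nat.
Variables u v u1 v1 u2 v2 : R -> R.
Hypothesis Hnz : forall t, u t <> 0 \/ v t <> 0.
Hypothesis Hd : forall t, derivable_pt_lim u t (u1 t) /\ derivable_pt_lim v t (v1 t) /\
               derivable_pt_lim u1 t (u2 t) /\ derivable_pt_lim v1 t (v2 t).
Hypothesis Hode : forall t, RMG_eq n lam (u t) (v t) (u1 t) (v1 t) (u2 t) (v2 t).

Definition sq_radius t := u t ^ 2 + v t ^ 2.
Definition radial_speed t := u t * u1 t + v t * v1 t.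
Definition energy t := Fc n (sq_radius t) * (u1 t ^ 2 + v1 t ^ 2).
(* Noether charge of the rotations [c -> e^{ia} c]; [s * dlnFc s] is a moment map
   for the Ricci form. *)
Definition momentum t :=
  Fc n (sq_radius t) * (u t * v1 t - v t * u1 t) + lam * (sq_radius t * dlnFc n (sq_radius t)).

Lemma sq_radius_pos t : 0 < sq_radius t.
Proof.
  unfold sq_radius. pose proof (pow2_ge_0 (u t)). pose proof (pow2_ge_0 (v t)).
  destruct (Hnz t) as [Hu|Hv].
  - assert (0 < u t ^ 2) by (simpl; rewrite Rmult_1_r; apply Rsqr_pos_lt; auto). lra.
  - assert (0 < v t ^ 2) by (simpl; rewrite Rmult_1_r; apply Rsqr_pos_lt; auto). lra.
Qed.

Lemma is_derive_u t : is_derive u t (u1 t). Proof. apply is_derive_Reals, Hd. Qed.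
Lemma is_derive_v t : is_derive v t (v1 t). Proof. apply is_derive_Reals, Hd. Qed.
Lemma is_derive_u1 t : is_derive u1 t (u2 t). Proof. apply is_derive_Reals, Hd. Qed.
Lemma is_derive_v1 t : is_derive v1 t (v2 t). Proof. apply is_derive_Reals, Hd. Qed.

Ltac rewrite_Derive :=
  repeat match goal with
  | H : is_derive ?f ?x ?l |- context [Derive (fun y => ?f y) ?x] =>
      replace (Derive (fun y => f y) x) with l by (symmetry; now apply is_derive_unique)
  end.

Lemma sq_radius_derive t : derivable_pt_lim sq_radius t (2 * radial_speed t).
Proof.
  apply is_derive_Reals. unfold sq_radius, radial_speed.
  pose proof (is_derive_u t). pose proof (is_derive_v t).
  auto_derive.
  - split; [exists (u1 t)| split; [exists (v1 t)|]]; auto.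
  - rewrite_Derive. ring.
Qed.

Lemma energy_derive t : derivable_pt_lim energy t 0.
Proof.
  apply is_derive_Reals. unfold energy, sq_radius.
  pose proof (sq_radius_pos t) as Hs. unfold sq_radius in Hs.
  pose proof (Fc_derivable n _ Hs) as HF.
  pose proof (is_derive_u t) as Hu. pose proof (is_derive_v t) as Hv.
  pose proof (is_derive_u1 t) as Hu1. pose proof (is_derive_v1 t) as Hv1.
  auto_derive; change (u t * (u t * 1) + v t * (v t * 1)) with (u t ^ 2 + v t ^ 2).
  - repeat split; eexists; eassumption.
  - rewrite_Derive.
    rewrite <- (RMG_energy_identity n lam (u t) (v t) (u1 t) (v1 t) (u2 t) (v2 t) Hs (Hode t)). ring.
Qed.

Lemma momentum_derive t : derivable_pt_lim momentum t 0.
Proof.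
  apply is_derive_Reals. unfold momentum, sq_radius.
  pose proof (sq_radius_pos t) as Hs. unfold sq_radius in Hs.
  pose proof (Fc_derivable n _ Hs) as HF. pose proof (dlnFc_derivable n _ Hs) as HH.
  pose proof (is_derive_u t) as Hu. pose proof (is_derive_v t) as Hv.
  pose proof (is_derive_u1 t) as Hu1. pose proof (is_derive_v1 t) as Hv1.
  auto_derive; change (u t * (u t * 1) + v t * (v t * 1)) with (u t ^ 2 + v t ^ 2).
  - repeat split; eexists; eassumption.
  - rewrite_Derive.
    rewrite <- (RMG_momentum_identity n lam (u t) (v t) (u1 t) (v1 t) (u2 t) (v2 t) Hs (Hode t)). ring.
Qed.

Hypothesis Hmom0 : momentum 0 = - lam * (1 + / INR n).
Hypothesis Henergy0 : energy_threshold n lam <= energy 0.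

Let energy_const t : energy t = energy 0.
Proof. apply const_of_derive_zero, energy_derive. Qed.

Let momentum_const t : momentum t = - lam * (1 + / INR n).
Proof. rewrite <- Hmom0. apply const_of_derive_zero, momentum_derive. Qed.

Lemma radial_speed_sq t : radial_speed t ^ 2 =
  sq_radius t * energy 0 / Fc n (sq_radius t)
  - lam ^ 2 * mom_density n (sq_radius t) ^ 2 / Fc n (sq_radius t) ^ 4.
Proof.
  pose proof (Fc_pos n _ (sq_radius_pos t)) as HF.
  assert (HnI : INR n <> 0) by (apply not_0_INR; lia).
  pose proof (momentum_const t) as HL. rewrite <- (energy_const t).
  unfold momentum, dlnFc in HL. unfold energy.
  set (F := Fc n (sq_radius t)) in *.
  assert (Hw : u t * v1 t - v t * u1 t = - lam * mom_density n (sq_radius t) / F ^ 2).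
  { unfold mom_density. fold F. apply Rmult_eq_reg_l with F; [|lra].
    replace (F * (- lam * (sq_radius t * dFc n (sq_radius t) + (1 + / INR n) * F) / F ^ 2))
      with (- lam * (1 + / INR n) - lam * (sq_radius t * (dFc n (sq_radius t) / F)))
      by (field; split; lra).
    lra. }
  replace (radial_speed t ^ 2) with (sq_radius t * (u1 t ^ 2 + v1 t ^ 2) - (u t * v1 t - v t * u1 t) ^ 2)
    by (unfold radial_speed, sq_radius; ring).
  rewrite Hw. unfold mom_density. fold F. field. lra.
Qed.

Lemma radial_speed_bound t : 1 <= sq_radius t ->
  1 <= radial_speed t ^ 2 * (mu_of n (sq_radius t) ^ (2 * n)) ^ 2 * mu_of n (sq_radius t) ^ 2.
Proof.
  intros Hs1. pose proof (sq_radius_pos t) as Hs.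
  destruct (scaling_constants_pos n ltac:(lia)) as [HcL [HCU HCD]].
  destruct (energy_threshold_ge n lam ltac:(lia)) as [HE2 HE3].
  assert (HP : 0 < 32 * PI) by (pose proof PI_RGT_0; lra).
  destruct (mu_of_le1 n (sq_radius t) ltac:(lia) Hs1) as [Hmu0 Hmu1].
  destruct (Fc_mom_density_scaled_bounds n (mu_of n (sq_radius t)) ltac:(lia) (conj Hmu0 Hmu1)) as [HFb HDb].
  assert (Hsa : / mu_of n (sq_radius t) ^ (2 * n) = sq_radius t)
    by (rewrite mu_of_pow, Rinv_inv by (lia || lra); auto).
  rewrite Hsa in HFb, HDb.
  set (a := mu_of n (sq_radius t) ^ (2 * n)) in *. set (m := mu_of n (sq_radius t) ^ 2) in *.
  assert (Ha0 : 0 < a) by (apply pow_lt; lra).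
  assert (Hm : 0 < m <= 1) by (unfold m; split; [apply pow_lt; lra| rewrite <- (pow1 2); apply pow_incr; lra]).
  set (F := Fc n (sq_radius t)) in *.
  pose proof (radial_speed_ineq a m F _ (energy 0) lam (32 * PI) (c_low n) (c_up n) (c_mom n)
                Ha0 Hm HP HcL HCU HCD HFb HDb ltac:(lra) ltac:(lra)) as K.
  assert (HF : 0 < F) by (apply Fc_pos; lra).
  rewrite radial_speed_sq. fold F.
  replace (sq_radius t * energy 0 / F) with (energy 0 / (a * F)) by (rewrite <- Hsa; field; lra).
  rewrite Rmult_assoc. exact K.
Qed.

Hypothesis Hu0 : u 0 = 1.
Hypothesis Hv0 : v 0 = 0.
Hypothesis Hu10 : 0 < u1 0.

Lemma radial_speed_continuous : continuity radial_speed.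
Proof.
  intros t. unfold radial_speed.
  destruct (Hd t) as [Hu [Hv [Hu1 Hv1]]].
  pose proof (derivable_continuous_pt u t (exist _ (u1 t) Hu)).
  pose proof (derivable_continuous_pt v t (exist _ (v1 t) Hv)).
  pose proof (derivable_continuous_pt u1 t (exist _ (u2 t) Hu1)).
  pose proof (derivable_continuous_pt v1 t (exist _ (v2 t) Hv1)).
  apply (continuity_pt_plus (fun t => u t * u1 t) (fun t => v t * v1 t)); apply continuity_pt_mult; auto.
Qed.

Lemma sq_radius_0 : sq_radius 0 = 1.
Proof. unfold sq_radius. rewrite Hu0, Hv0. ring. Qed.

Lemma radial_speed_pos t : 0 <= t -> 0 < radial_speed t.
Proof.
  apply (pos_forward radial_speed sq_radius 1 radial_speed_continuous sq_radius_derive).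
  - unfold radial_speed. rewrite Hu0, Hv0. lra.
  - rewrite sq_radius_0. lra.
  - intros r Hr Hq0. pose proof (radial_speed_bound r Hr) as H.
    rewrite Hq0 in H. simpl in H. lra.
Qed.

Lemma sq_radius_ge1 t : 0 <= t -> 1 <= sq_radius t.
Proof.
  intros Ht. destruct (Req_dec t 0) as [->|Ht0]; [rewrite sq_radius_0; lra|].
  destruct (MVT_cor2 sq_radius (fun t => 2 * radial_speed t) 0 t) as [c [Hc1 Hc2]];
    [lra| intros c _; apply sq_radius_derive|].
  pose proof (radial_speed_pos c ltac:(lra)). rewrite sq_radius_0 in Hc1. nra.
Qed.

Let scale t := mu_of n (sq_radius t).

Let scale_rate t := mu_of n (sq_radius t) * (- (2 * radial_speed t / sq_radius t) / INR (2 * n)).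

Let scale_derive t : derivable_pt_lim scale t (scale_rate t).
Proof. apply mu_of_derive; [lia| apply sq_radius_pos| apply sq_radius_derive]. Qed.

(* By [radial_speed_bound], [q * mu ^ (2n+1) >= 1], so [mu] decreases at rate at least [1/n]. *)
Lemma scale_rate_le t : 0 <= t -> scale_rate t <= - / INR n.
Proof.
  intros Ht. unfold scale_rate.
  assert (HnI : 0 < INR n) by (apply lt_0_INR; lia).
  pose proof (radial_speed_bound t (sq_radius_ge1 t Ht)) as Hq.
  pose proof (sq_radius_pos t) as Hs. pose proof (radial_speed_pos t Ht) as Hqp.
  rewrite (mu_of_pow n (sq_radius t) ltac:(lia) Hs) in Hq.
  assert (Hm : 0 < mu_of n (sq_radius t)) by (unfold mu_of; apply exp_pos).
  set (x := radial_speed t * / sq_radius t * mu_of n (sq_radius t)).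
  assert (Hx0 : 0 < x)
    by (unfold x; apply Rmult_lt_0_compat; [apply Rmult_lt_0_compat; [|apply Rinv_0_lt_compat]|]; auto).
  assert (Hx : 1 <= x).
  { assert (1 <= x ^ 2); [|nra].
    unfold x. replace ((radial_speed t * / sq_radius t * mu_of n (sq_radius t)) ^ 2)
      with (radial_speed t ^ 2 * (/ sq_radius t) ^ 2 * mu_of n (sq_radius t) ^ 2) by ring. auto. }
  replace (mu_of n (sq_radius t) * (- (2 * radial_speed t / sq_radius t) / INR (2 * n))) with (- x / INR n)
    by (unfold x; rewrite mult_INR; simpl INR; field; split; lra).
  assert (0 < / INR n) by (apply Rinv_0_lt_compat; auto). unfold Rdiv. nra.
Qed.

Lemma no_global_RMG_curve : False.
Proof.
  assert (HnI : 0 < INR n) by (apply lt_0_INR; lia).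
  destruct (MVT_cor2 scale scale_rate 0 (INR n)) as [c [Hc1 Hc2]]; [auto| intros c _; apply scale_derive|].
  assert (Hscale0 : scale 0 = 1).
  { unfold scale, mu_of. rewrite sq_radius_0, ln_1.
    replace (- 0 / INR (2 * n)) with 0 by (field; apply not_0_INR; lia). apply exp_0. }
  assert (Hscale : 0 < scale (INR n)) by (unfold scale, mu_of; apply exp_pos).
  pose proof (scale_rate_le c ltac:(lra)) as Hle.
  apply Rmult_le_compat_r with (r := INR n) in Hle; [|lra].
  replace (- / INR n * INR n) with (-1) in Hle by (field; lra).
  replace (INR n - 0) with (INR n) in Hc1 by ring. lra.
Qed.

End Flow.

Theorem corollary4p6 (n : nat) (lam : R) (Hn : (5 <= n)%nat) :
  exists x0 y0 vx vy : R,
    (x0 <> 0 \/ y0 <> 0) /\ ~ global_RMG_curve n lam x0 y0 vx vy.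
Proof.
  assert (HF : 0 < Fc n 1) by (apply Fc_pos; lra).
  assert (HnI : INR n <> 0) by (apply not_0_INR; lia).
  set (vy := (- lam * (1 + / INR n) - lam * dlnFc n 1) / Fc n 1).
  set (V := energy_threshold n lam / Fc n 1 + 1).
  assert (HV : 1 <= V).
  { destruct (energy_threshold_ge n lam ltac:(lia)) as [HE _].
    pose proof PI_RGT_0. destruct (scaling_constants_pos n ltac:(lia)) as [_ [Hu _]].
    assert (0 <= energy_threshold n lam / Fc n 1) by (apply Rdiv_le_0_compat; nra). unfold V; lra. }
  exists 1, 0, V, vy. split; [left; lra|].
  intros (u & v & u1 & v1 & u2 & v2 & Hu0 & Hv0 & Hu10 & Hv10 & Hnz & Hd & Hode).
  apply (no_global_RMG_curve n lam Hn u v u1 v1 u2 v2 Hnz Hd Hode); auto; try lra.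
  - unfold momentum, sq_radius. rewrite Hu0, Hv0, Hu10, Hv10.
    replace (1 ^ 2 + 0 ^ 2) with 1 by ring. unfold vy. field. split; lra.
  - unfold energy, sq_radius. rewrite Hu0, Hv0, Hu10, Hv10.
    replace (1 ^ 2 + 0 ^ 2) with 1 by ring.
    assert (Fc n 1 * V = energy_threshold n lam + Fc n 1) by (unfold V; field; lra).
    assert (Fc n 1 * V <= Fc n 1 * V ^ 2) by (apply Rmult_le_compat_l; nra).
    assert (0 <= Fc n 1 * vy ^ 2) by (apply Rmult_le_pos; [lra| apply pow2_ge_0]). nra.
Qed.
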